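(* Assume $|p_1|=\Gamma_{\mathrm{rel}}\ell$ and $g[\![\rho]\!]-\Gamma_{\mathrm{rel}}^2\coth(p_1/\Gamma_{\mathrm{rel}})<0$, and let $\lambda^*>0$ be the unique solution of $g[\![\rho]\!]=\Gamma_{\mathrm{rel}}^2\coth(p_1/\Gamma_{\mathrm{rel}})-\lambda^2\coth((p_1-p_0)/\lambda)$. Then the null space of the linear operator $\mathcal L_{\lambda^*}:X\to Y$ is one-dimensional.
   Context: Constants $g>0$, $\ell>0$, $p_0<p_1<0$, $[\![\rho]\!]<0$, $\Gamma_{\mathrm{rel}}>0$. Period $2\pi$ in $q$. $D_1=\{(q,p):p_1<p<0\}$, $D_2=\{(q,p):p_0<p<p_1\}$, $D=D_1\cup D_2$, $I=\{p=p_1\}$, $T=\{p=0\}$; $f^{(i)}=f|_{D_i}$, $[\![f]\!]=f^{(1)}|_I-f^{(2)}|_I$. $C^{k+\alpha}_{\mathrm{per}}$ means $C^{k+\alpha}$, $2\pi$-periodic and even in $q$; $d(\varphi)=\frac1{2\pi}\int_{-\pi}^\pi\varphi(q,p_1)dq$. $X=\{\varphi\in C^{2+\alpha}_{\mathrm{per}}(\overline D\setminus I)\cap C^{\alpha}_{\mathrm{per}}(\overline D):\varphi|_{p=p_0}=0,\ \varphi^{(i)}\in C^{1+\alpha}_{\mathrm{per}}(\overline{D_i})\}$, $Y=Y_1\times Y_2\times Y_3\times Y_4$ with $Y_1=C^{2+\alpha}_{\mathrm{per}}(\overline{D_1}\setminus I)\cap C^\alpha_{\mathrm{per}}(\overline{D_1})$,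 $Y_2=C^{2+\alpha}_{\mathrm{per}}(\overline{D_2}\setminus I)\cap C^\alpha_{\mathrm{per}}(\overline{D_2})$, $Y_3=C^\alpha_{\mathrm{per}}(I)$, $Y_4=C^{2+\alpha}_{\mathrm{per}}(T)$. For $\lambda>0$ let $H_p=1/\Gamma_{\mathrm{rel}}$ on $D_1$, $H_p=1/\lambda$ on $D_2$ (derivative of the laminar solution), and let $\mathcal L_\lambda$ (the Fréchet derivative at $w=0$ of the height-equation operator linearized about the laminar flow) be $\mathcal L_\lambda\varphi=\big((\partial_p^2+H_p^2\partial_q^2)\varphi^{(1)},\ (\partial_p^2+H_p^2\partial_q^2)\varphi^{(2)},\ 2[\![H_p^{-3}\varphi_p]\!]-2g[\![\rho]\!]\varphi|_I,\ (\varphi-d(\varphi))|_T\big)$. *)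

From Stdlib Require Export Reals.
From Coquelicot Require Export Coquelicot.
Open Scope R_scope.

Definition coth (x : R) : R := cosh x / sinh x.

(* partial derivatives (meaningful where they exist) *)
Definition Dq (f : R -> R -> R) : R -> R -> R :=
  fun q p => Derive (fun x => f x p) q.
Definition Dp (f : R -> R -> R) : R -> R -> R :=
  fun q p => Derive (fun y => f q y) p.

Definition closed_strip (a b : R) (q p : R) : Prop := a <= p <= b.
Definition open_strip (a b : R) (q p : R) : Prop := a < p < b.

Definition holder (alpha : R) (S : R -> R -> Prop) (u : R -> R -> R) : Prop :=
  (exists M, forall q p, S q p -> Rabs (u q p) <= M) /\
  (exists C, forall qa pa qb pb, S qa pa -> S qb pb -> (qa, pa) <> (qb, pb) ->
     Rabs (u qa pa - u qb pb)
       <= C * Rpower (sqrt ((qa - qb) ^ 2 + (pa - pb) ^ 2)) alpha).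

Definition diff_on (S : R -> R -> Prop) (f : R -> R -> R) : Prop :=
  forall q p, S q p -> ex_derive (fun x => f x p) q /\ ex_derive (fun y => f q y) p.

(* C^{1+alpha} on the closed strip a <= p <= b: f is C^alpha up to the boundary,
   and its first partial derivatives (in the interior) are uniformly C^alpha,
   hence extend C^alpha up to the boundary *)
Definition C1alpha (alpha a b : R) (f : R -> R -> R) : Prop :=
  holder alpha (closed_strip a b) f /\
  diff_on (open_strip a b) f /\
  holder alpha (open_strip a b) (Dq f) /\
  holder alpha (open_strip a b) (Dp f).

Definition C2alpha (alpha a b : R) (f : R -> R -> R) : Prop :=
  C1alpha alpha a b f /\
  diff_on (open_strip a b) (Dq f) /\
  diff_on (open_strip a b) (Dp f) /\
  holder alpha (open_strip a b) (Dq (Dq f)) /\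
  holder alpha (open_strip a b) (Dp (Dq f)) /\
  holder alpha (open_strip a b) (Dq (Dp f)) /\
  holder alpha (open_strip a b) (Dp (Dp f)).

Definition per_even (a b : R) (f : R -> R -> R) : Prop :=
  forall q p, a <= p <= b -> f (q + 2 * PI) p = f q p /\ f (- q) p = f q p.

(* The space X (D = {p0 < p < 0} minus I = {p = p1}).
   C^{2+alpha}_per(Dbar \ I) is read locally up to I: C^{2+alpha} on every closed
   strip of Dbar at positive distance from I. *)
Definition in_X (alpha p0 p1 : R) (phi : R -> R -> R) : Prop :=
  per_even p0 0 phi /\
  holder alpha (closed_strip p0 0) phi /\
  (forall d, 0 < d -> C2alpha alpha p0 (p1 - d) phi /\ C2alpha alpha (p1 + d) 0 phi) /\
  (forall q, phi q p0 = 0) /\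
  C1alpha alpha p1 0 phi /\
  C1alpha alpha p0 p1 phi.

Definition dmean (p1 : R) (phi : R -> R -> R) : R :=
  / (2 * PI) * RInt (fun q => phi q p1) (- PI) PI.

(* phi lies in the null space of L_lambda : X -> Y.
   H_p = 1/Gam on D1, 1/lam on D2.  The traces phi_p^{(i)}|_I are the one-sided
   limits of phi_p at p = p1 (they exist for phi in X). *)
Definition in_kernel (alpha g p0 p1 jrho Gam lam : R) (phi : R -> R -> R) : Prop :=
  let Hp1 := / Gam in
  let Hp2 := / lam in
  in_X alpha p0 p1 phi /\
  (forall q p, p1 < p < 0 -> Dp (Dp phi) q p + Hp1 ^ 2 * Dq (Dq phi) q p = 0) /\
  (forall q p, p0 < p < p1 -> Dp (Dp phi) q p + Hp2 ^ 2 * Dq (Dq phi) q p = 0) /\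
  (forall q, exists L1 L2,
      filterlim (fun p => Dp phi q p) (at_right p1) (locally L1) /\
      filterlim (fun p => Dp phi q p) (at_left p1) (locally L2) /\
      2 * (/ Hp1 ^ 3 * L1 - / Hp2 ^ 3 * L2) - 2 * g * jrho * phi q p1 = 0) /\
  (forall q, phi q 0 - dmean p1 phi = 0).

(* The kernel is spanned by phi0 (q, p) = cos q * A p, where A is the piecewise sinh profile
   vanishing at p0 and 0 and equal to 1 at p1; its transmission condition at p1 is exactly the
   dispersion relation defining lam.  Conversely, the cosine coefficients
   c_k (p) = int_{-PI}^{PI} phi (q, p) cos (k q) dq of a kernel element solve
   c_k'' = (k / H_p)^2 c_k on each layer (differentiate under the integral, integrate by parts
   twice in q), vanish at p0 and, for k >= 1, at 0, and inherit the transmission condition.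
   For k = 0 the affine solutions are excluded because lam^3 + g [[rho]] (p1 - p0) < 0, for
   k >= 2 because sinh (k x) cosh x < k cosh (k x) sinh x, and c_1 is a multiple of A.  Since
   phi is even in q, a function all of whose cosine coefficients vanish is zero, so
   phi - c phi0 = 0 for the right constant c. *)

From Stdlib Require Import Reals Lra Lia ZArith.
From Coquelicot Require Import Coquelicot.
Open Scope R_scope.

(** * Hyperbolic functions *)

Lemma is_derive_Rminus (f g : R -> R) x df dg :
  is_derive f x df -> is_derive g x dg -> is_derive (fun t => f t - g t) x (df - dg).
Proof. apply (is_derive_minus f g). Qed.

Lemma is_derive_Rmult (f g : R -> R) x df dg :
  is_derive f x df -> is_derive g x dg -> is_derive (fun t => f t * g t) x (df * g x + f x * dg).
Proof. intros. apply (is_derive_mult f g); auto. intros; apply Rmult_comm. Qed.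

Lemma cosh2_sinh2 x : cosh x * cosh x - sinh x * sinh x = 1.
Proof. unfold cosh, sinh. rewrite exp_Ropp. assert (H := exp_pos x). field. lra. Qed.

Lemma sinh_plus x y : sinh (x + y) = sinh x * cosh y + cosh x * sinh y.
Proof.
  unfold cosh, sinh. rewrite Ropp_plus_distr, !exp_plus, !exp_Ropp.
  assert (H := exp_pos x). assert (H' := exp_pos y). field. lra.
Qed.

Lemma cosh_plus x y : cosh (x + y) = cosh x * cosh y + sinh x * sinh y.
Proof.
  unfold cosh, sinh. rewrite Ropp_plus_distr, !exp_plus, !exp_Ropp.
  assert (H := exp_pos x). assert (H' := exp_pos y). field. lra.
Qed.

Lemma sinh_neg x : sinh (- x) = - sinh x.
Proof. unfold sinh. rewrite Ropp_involutive. field. Qed.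

Lemma cosh_neg x : cosh (- x) = cosh x.
Proof. unfold cosh. rewrite Ropp_involutive. field. Qed.

Lemma sinh_pos x : 0 < x -> 0 < sinh x.
Proof. intros. rewrite <- sinh_0. now apply sinh_lt. Qed.

Lemma sinh_lt_0 x : x < 0 -> sinh x < 0.
Proof. intros. rewrite <- sinh_0. now apply sinh_lt. Qed.

Lemma sinh_nonneg x : 0 <= x -> 0 <= sinh x.
Proof. intros [H|<-]; [now apply Rlt_le, sinh_pos | rewrite sinh_0; lra]. Qed.

Lemma cosh_pos x : 0 < cosh x.
Proof. unfold cosh. assert (H := exp_pos x). assert (H' := exp_pos (- x)). lra. Qed.

Lemma is_derive_sinh x : is_derive sinh x (cosh x).
Proof. apply is_derive_Reals, derivable_pt_lim_sinh. Qed.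

Lemma is_derive_cosh x : is_derive cosh x (sinh x).
Proof. apply is_derive_Reals, derivable_pt_lim_cosh. Qed.

Lemma is_derive_sinh_affine m c y : is_derive (fun t => sinh (m * t + c)) y (m * cosh (m * y + c)).
Proof.
  apply (is_derive_comp sinh (fun t => m * t + c)); [apply is_derive_sinh|].
  auto_derive; [auto | ring].
Qed.

Lemma is_derive_cosh_affine m c y : is_derive (fun t => cosh (m * t + c)) y (m * sinh (m * y + c)).
Proof.
  apply (is_derive_comp cosh (fun t => m * t + c)); [apply is_derive_cosh|].
  auto_derive; [auto | ring].
Qed.

Lemma sinh_le_mul_cosh v : 0 < v -> sinh v <= v * cosh v.
Proof.
  intros Hv.
  destruct (MVT_gen (fun t => t * cosh t - sinh t) 0 v (fun t => t * sinh t)) as [c [Hc Heq]].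
  - intros t _. replace (t * sinh t) with (1 * cosh t + t * sinh t - cosh t) by ring.
    apply is_derive_Rminus; [apply is_derive_Rmult; [auto_derive; auto | apply is_derive_cosh]|].
    apply is_derive_sinh.
  - intros t _. apply continuity_pt_minus; [apply continuity_pt_mult|].
    + apply continuity_pt_id.
    + apply derivable_continuous_pt, derivable_pt_cosh.
    + apply derivable_continuous_pt, derivable_pt_sinh.
  - rewrite Rmin_left, Rmax_right in Hc by lra. simpl in Heq. rewrite Rmult_0_l, sinh_0 in Heq.
    assert (0 <= c * sinh c * (v - 0)).
    { apply Rmult_le_pos; [apply Rmult_le_pos; [lra | apply sinh_nonneg; lra] | lra]. }
    lra.
Qed.

(* The addition formulas turn the claim for m + 1 into the claim for m plus a positive term. *)
Lemma sinh_mul_cosh_step m x : 0 < x -> 1 <= m ->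
  sinh (m * x) * cosh x <= m * cosh (m * x) * sinh x ->
  sinh ((m + 1) * x) * cosh x < (m + 1) * cosh ((m + 1) * x) * sinh x.
Proof.
  intros Hx Hm IH. replace ((m + 1) * x) with (m * x + x) by ring.
  rewrite sinh_plus, cosh_plus.
  assert (Hs := sinh_pos x Hx). assert (Hsm := sinh_pos (m * x) ltac:(nra)).
  assert (Hc := cosh_pos x). assert (Hcm := cosh_pos (m * x)).
  assert (sinh (m * x) * cosh x * cosh x <= m * cosh (m * x) * sinh x * cosh x) by nra.
  assert (0 < (m + 1) * sinh (m * x) * sinh x * sinh x).
  { apply Rmult_lt_0_compat; [apply Rmult_lt_0_compat|]; try lra. apply Rmult_lt_0_compat; lra. }
  nra.
Qed.

Lemma sinh_mul_cosh_le (n : nat) x : 0 < x -> (1 <= n)%nat ->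
  sinh (INR n * x) * cosh x <= INR n * cosh (INR n * x) * sinh x.
Proof.
  intros Hx Hn. induction n as [|n IH]; [lia|].
  destruct (Nat.eq_dec n 0) as [->|Hn0].
  - simpl. rewrite !Rmult_1_l. lra.
  - rewrite S_INR. apply Rlt_le, sinh_mul_cosh_step; auto.
    + apply (le_INR 1); lia.
    + apply IH; lia.
Qed.

Lemma sinh_mul_cosh_lt (n : nat) x : 0 < x -> (2 <= n)%nat ->
  sinh (INR n * x) * cosh x < INR n * cosh (INR n * x) * sinh x.
Proof.
  intros Hx Hn. destruct n as [|n]; [lia|]. rewrite S_INR.
  apply sinh_mul_cosh_step; auto.
  - apply (le_INR 1); lia.
  - apply sinh_mul_cosh_le; auto; lia.
Qed.

Lemma Rpower_pos x a : 0 < Rpower x a.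
Proof. apply exp_pos. Qed.

Lemma Rpower_ge_self d al : 0 < d <= 1 -> 0 < al <= 1 -> d <= Rpower d al.
Proof.
  intros Hd Hal.
  assert (E : d = Rpower d al * Rpower d (1 - al)).
  { rewrite <- Rpower_plus. replace (al + (1 - al)) with 1 by ring. rewrite Rpower_1; lra. }
  assert (H1 : Rpower d (1 - al) <= Rpower 1 (1 - al)) by (apply Rle_Rpower_l; lra).
  replace (Rpower 1 (1 - al)) with 1 in H1 by (unfold Rpower; rewrite ln_1, Rmult_0_r, exp_0; reflexivity).
  assert (0 < Rpower d (1 - al)) by apply Rpower_pos.
  assert (0 < Rpower d al) by apply Rpower_pos. nra.
Qed.

Lemma mul_Rpower_small al K eps : 0 < al -> 0 < eps ->
  exists del, 0 < del /\ forall r, 0 < r -> r < del -> Rabs K * Rpower r al < eps.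
Proof.
  intros Hal He. set (K1 := Rabs K + 1).
  assert (HK1 : 0 < K1) by (unfold K1; assert (H := Rabs_pos K); lra).
  exists (Rpower (eps / K1) (/ al)). split; [apply Rpower_pos|].
  intros r Hr Hrd.
  assert (H1 : Rpower r al < Rpower (Rpower (eps / K1) (/ al)) al) by (apply Rlt_Rpower_l; auto).
  rewrite Rpower_mult, Rinv_l, Rpower_1 in H1 by (try lra; apply Rdiv_lt_0_compat; lra).
  assert (H2 := Rpower_pos r al).
  apply Rle_lt_trans with (K1 * Rpower r al); [apply Rmult_le_compat_r; unfold K1; lra|].
  apply Rmult_lt_compat_l with (r := K1) in H1; auto.
  replace (K1 * (eps / K1)) with eps in H1 by (field; lra). lra.
Qed.

Lemma continuous_eps_delta (F : R -> R) x0 : continuous F x0 -> forall eps, 0 < eps ->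
  exists del, 0 < del /\ forall p, Rabs (p - x0) < del -> Rabs (F p - F x0) < eps.
Proof.
  intros HF eps He. apply continuity_pt_filterlim in HF.
  destruct (HF eps He) as [d [Hd H]]. exists d; split; auto.
  intros p Hp. destruct (Req_dec p x0) as [->|Hne].
  - rewrite Rminus_eq_0, Rabs_R0; auto.
  - apply (H p). repeat split; auto.
Qed.

Lemma interval_meets_ball a b x0 del : a < b -> a <= x0 <= b -> 0 < del ->
  exists p, a < p < b /\ Rabs (p - x0) < del.
Proof.
  intros Hab Hx Hd. destruct (Rlt_dec x0 ((a + b) / 2)).
  - exists (x0 + Rmin del (b - x0) / 2).
    assert (H1 := Rmin_l del (b - x0)). assert (H2 := Rmin_r del (b - x0)).
    assert (0 < Rmin del (b - x0)) by (apply Rmin_pos; lra).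
    split; [lra | rewrite Rabs_right; lra].
  - exists (x0 - Rmin del (x0 - a) / 2).
    assert (H1 := Rmin_l del (x0 - a)). assert (H2 := Rmin_r del (x0 - a)).
    assert (0 < Rmin del (x0 - a)) by (apply Rmin_pos; lra).
    split; [lra | rewrite Rabs_left; lra].
Qed.

Lemma eq_0_of_small_near X a b x0 : a < b -> a <= x0 <= b ->
  (forall eps, 0 < eps -> exists del, 0 < del /\
     forall p, a < p < b -> Rabs (p - x0) < del -> Rabs X < eps) -> X = 0.
Proof.
  intros Hab Hx H. destruct (Req_dec X 0) as [|HX]; auto. exfalso.
  assert (HX' : 0 < Rabs X) by (apply Rabs_pos_lt; auto).
  destruct (H (Rabs X) HX') as [d [Hd Hp]].
  destruct (interval_meets_ball a b x0 d Hab Hx Hd) as [p [H1 H2]].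
  specialize (Hp p H1 H2). lra.
Qed.

Definition holder_on (al a b K : R) (c : R -> R) : Prop :=
  forall p p', a <= p <= b -> a <= p' <= b -> p <> p' ->
    Rabs (c p - c p') <= K * Rpower (Rabs (p - p')) al.

Lemma holder_on_eq_endpoint (c F : R -> R) a b x0 al K : 0 < al -> a < b -> a <= x0 <= b ->
  holder_on al a b K c -> (forall p, a < p < b -> c p = F p) -> continuous F x0 ->
  c x0 = F x0.
Proof.
  intros Hal Hab Hx Hc Heq HF.
  apply Rminus_diag_uniq, (eq_0_of_small_near _ a b x0); auto.
  intros eps He.
  destruct (continuous_eps_delta F x0 HF (eps / 2)) as [d1 [Hd1 H1]]; [lra|].
  destruct (mul_Rpower_small al K (eps / 2) Hal) as [d2 [Hd2 H2]]; [lra|].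
  exists (Rmin d1 d2). split; [apply Rmin_pos; auto|].
  intros p Hp Hpx. assert (Hm1 := Rmin_l d1 d2). assert (Hm2 := Rmin_r d1 d2).
  destruct (Req_dec p x0) as [->|Hne].
  - rewrite <- (Heq x0 Hp), Rminus_eq_0, Rabs_R0. lra.
  - specialize (H1 p ltac:(lra)). rewrite <- (Heq p Hp) in H1.
    assert (H3 := Hc p x0 ltac:(lra) Hx Hne).
    assert (H4 : Rabs K * Rpower (Rabs (p - x0)) al < eps / 2).
    { apply H2; [apply Rabs_pos_lt|]; lra. }
    assert (K * Rpower (Rabs (p - x0)) al <= Rabs K * Rpower (Rabs (p - x0)) al).
    { apply Rmult_le_compat_r; [apply Rlt_le, Rpower_pos | apply Rle_abs]. }
    replace (c x0 - F x0) with (- (c p - c x0) + (c p - F x0)) by ring.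
    apply Rle_lt_trans with (1 := Rabs_triang _ _). rewrite Rabs_Ropp. lra.
Qed.

Lemma holder_on_eq_closed (c F : R -> R) a b al K : 0 < al -> a < b ->
  holder_on al a b K c -> (forall p, a < p < b -> c p = F p) -> (forall x, continuous F x) ->
  forall p, a <= p <= b -> c p = F p.
Proof.
  intros Hal Hab HK HE HF p Hp.
  destruct (Rlt_dec a p); [destruct (Rlt_dec p b)|].
  - apply HE; lra.
  - apply (holder_on_eq_endpoint c F a b p al K); auto.
  - apply (holder_on_eq_endpoint c F a b p al K); auto.
Qed.

Lemma derive0_const (f : R -> R) a b : (forall x, a < x < b -> is_derive f x 0) ->
  forall x y, a < x < b -> a < y < b -> f x = f y.
Proof.
  intros Hd x y Hx Hy.
  assert (Hxy : forall t, Rmin x y <= t <= Rmax x y -> a < t < b).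
  { intros t Ht. split.
    - apply Rlt_le_trans with (Rmin x y); [apply Rmin_glb_lt|]; lra.
    - apply Rle_lt_trans with (Rmax x y); [|apply Rmax_lub_lt]; lra. }
  destruct (MVT_gen f x y (fun _ => 0)) as [c [Hc Heq]].
  - intros t Ht. apply Hd, Hxy. lra.
  - intros t Ht. apply continuity_pt_filterlim, (ex_derive_continuous f).
    exists 0. apply Hd, Hxy, Ht.
  - lra.
Qed.

(* The Wronskian-type combinations G1, G2 below are constant, and they determine c and d. *)
Lemma ode_hyperbolic (c d : R -> R) m k0 a b : 0 < m -> a < b ->
  (forall p, a < p < b -> is_derive c p (d p)) ->
  (forall p, a < p < b -> is_derive d p (m * m * c p)) ->
  exists A B, forall p, a < p < b ->
    c p = A * cosh (m * p + k0) + B * sinh (m * p + k0) /\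
    d p = m * (A * sinh (m * p + k0) + B * cosh (m * p + k0)).
Proof.
  intros Hm Hab Hc Hd.
  set (G1 := fun p => d p * cosh (m * p + k0) - m * (c p * sinh (m * p + k0))).
  set (G2 := fun p => d p * sinh (m * p + k0) - m * (c p * cosh (m * p + k0))).
  assert (HG1 : forall p, a < p < b -> is_derive G1 p 0).
  { intros p Hp. unfold G1. evar (l : R). replace 0 with l.
    - apply is_derive_Rminus; [apply is_derive_Rmult; [apply Hd; auto | apply is_derive_cosh_affine]|].
      apply is_derive_scal, is_derive_Rmult; [apply Hc; auto | apply is_derive_sinh_affine].
    - unfold l; ring. }
  assert (HG2 : forall p, a < p < b -> is_derive G2 p 0).
  { intros p Hp. unfold G2. evar (l : R). replace 0 with l.
    - apply is_derive_Rminus; [apply is_derive_Rmult; [apply Hd; auto | apply is_derive_sinh_affine]|].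
      apply is_derive_scal, is_derive_Rmult; [apply Hc; auto | apply is_derive_cosh_affine].
    - unfold l; ring. }
  set (pm := (a + b) / 2). assert (Hpm : a < pm < b) by (unfold pm; lra).
  exists (- G2 pm / m), (G1 pm / m). intros p Hp.
  rewrite <- (derive0_const G1 a b HG1 p pm Hp Hpm), <- (derive0_const G2 a b HG2 p pm Hp Hpm).
  unfold G1, G2. assert (Hcs := cosh2_sinh2 (m * p + k0)).
  set (C := cosh (m * p + k0)) in *. set (S := sinh (m * p + k0)) in *.
  split.
  - transitivity (c p * (C * C - S * S)); [rewrite Hcs; ring | field; lra].
  - transitivity (d p * (C * C - S * S)); [rewrite Hcs; ring | field; lra].
Qed.

Lemma ode_affine (c d : R -> R) a b : a < b ->
  (forall p, a < p < b -> is_derive c p (d p)) ->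
  (forall p, a < p < b -> is_derive d p 0) ->
  exists A B, forall p, a < p < b -> c p = A + B * p /\ d p = B.
Proof.
  intros Hab Hc Hd.
  set (pm := (a + b) / 2). assert (Hpm : a < pm < b) by (unfold pm; lra).
  assert (E := derive0_const d a b Hd).
  set (G := fun p => c p - d pm * p).
  assert (HG : forall p, a < p < b -> is_derive G p 0).
  { intros p Hp. unfold G. evar (l : R). replace 0 with l.
    - apply is_derive_Rminus; [apply Hc; auto | apply is_derive_scal, is_derive_id].
    - unfold l. rewrite (E p pm) by auto. simpl. unfold one; simpl. ring. }
  exists (G pm), (d pm). intros p Hp. split.
  - rewrite <- (derive0_const G a b HG p pm); auto. unfold G; ring.
  - apply E; auto.
Qed.

Lemma lipschitz_of_bounded_derive (w w' : R -> R) lo hi L :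
  (forall x, lo <= x <= hi -> is_derive w x (w' x)) -> (forall x, lo <= x <= hi -> Rabs (w' x) <= L) ->
  forall a b, lo <= a <= hi -> lo <= b <= hi -> Rabs (w a - w b) <= L * Rabs (a - b).
Proof.
  intros Hd HL a b Ha Hb.
  assert (Hlo : lo <= Rmin b a) by (apply Rmin_glb; lra).
  assert (Hhi : Rmax b a <= hi) by (apply Rmax_lub; lra).
  destruct (MVT_gen w b a w') as [c [Hc Heq]].
  - intros x Hx. apply Hd. split; [apply Rle_trans with (Rmin b a) | apply Rle_trans with (Rmax b a)]; lra.
  - intros x Hx. apply continuity_pt_filterlim, (ex_derive_continuous w).
    exists (w' x). apply Hd. lra.
  - rewrite Heq, Rabs_mult. apply Rmult_le_compat_r; [apply Rabs_pos | apply HL; lra].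
Qed.

Lemma locally_open_interval lo hi p : lo < p < hi -> locally p (fun y => lo < y < hi).
Proof.
  intros Hp. assert (H : 0 < Rmin (p - lo) (hi - p)) by (apply Rmin_pos; lra).
  exists (mkposreal _ H). intros y Hy. simpl in Hy.
  change (Rabs (y - p) < Rmin (p - lo) (hi - p)) in Hy.
  assert (H1 := Rmin_l (p - lo) (hi - p)). assert (H2 := Rmin_r (p - lo) (hi - p)).
  apply Rabs_def2 in Hy. lra.
Qed.

(* [dir = 1] gives the limit from the right, [dir = -1] the limit from the left. *)
Lemma holder_one_sided_limit (f : R -> R) x0 L C al dir : 0 < al -> (dir = 1 \/ dir = -1) ->
  filterlim f (within (fun u => 0 < dir * (u - x0)) (locally x0)) (locally L) ->
  forall y, 0 < dir * (y - x0) ->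
  (forall z, 0 < dir * (z - x0) < dir * (y - x0) -> Rabs (f y - f z) <= C * Rpower (Rabs (y - z)) al) ->
  Rabs (f y - L) <= Rabs C * Rpower (Rabs (y - x0)) al.
Proof.
  intros Hal Hdir Hlim y Hy Hh. apply le_epsilon. intros eta Heta.
  destruct (proj1 (filterlim_locally f L) Hlim (mkposreal eta Heta)) as [d Hd]. simpl in Hd.
  set (t := Rmin d (dir * (y - x0)) / 2).
  assert (Ht1 := Rmin_l d (dir * (y - x0))). assert (Ht2 := Rmin_r d (dir * (y - x0))).
  assert (Ht0 : 0 < Rmin d (dir * (y - x0))) by (apply Rmin_pos; [apply cond_pos | lra]).
  assert (Hd0 := cond_pos d).
  set (z := x0 + dir * t).
  assert (Hz : 0 < dir * (z - x0) < dir * (y - x0)) by (unfold z, t; destruct Hdir as [-> | ->]; lra).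
  assert (Hzb : Rabs (z - x0) < d).
  { unfold z, t. destruct Hdir as [-> | ->]; [rewrite Rabs_right | rewrite Rabs_left]; lra. }
  specialize (Hd z Hzb (proj1 Hz)). change (Rabs (f z - L) < eta) in Hd.
  assert (H1 := Hh z Hz).
  assert (Hyz : 0 < Rabs (y - z) <= Rabs (y - x0)).
  { destruct Hdir as [-> | ->]; (split; [apply Rabs_pos_lt; lra|]);
      [rewrite !Rabs_right | rewrite !Rabs_left]; lra. }
  assert (H2 : Rpower (Rabs (y - z)) al <= Rpower (Rabs (y - x0)) al) by (apply Rle_Rpower_l; lra).
  assert (H3 := Rpower_pos (Rabs (y - z)) al).
  assert (H4 : C * Rpower (Rabs (y - z)) al <= Rabs C * Rpower (Rabs (y - x0)) al).
  { apply Rle_trans with (Rabs C * Rpower (Rabs (y - z)) al).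
    - apply Rmult_le_compat_r; [lra | apply Rle_abs].
    - apply Rmult_le_compat_l; [apply Rabs_pos | auto]. }
  replace (f y - L) with ((f y - f z) + (f z - L)) by ring.
  apply Rle_trans with (1 := Rabs_triang _ _). lra.
Qed.

Lemma filter_le_within_sub x0 (D D' : R -> Prop) : (forall u, D u -> D' u) ->
  filter_le (within D (locally x0)) (within D' (locally x0)).
Proof. intros HD P HP. unfold within in *. apply (filter_imp (fun u => D' u -> P u)); auto. Qed.

(* Evaluate at p and at its mirror image 2 p1 - p, which approach p1 together. *)
Lemma transmission_limit (d F1 F2 : R -> R) c Gam lam gj p0 p1 al K :
  0 < al -> p0 < p1 -> p1 < 0 -> 0 < Gam -> 0 < lam ->
  (forall p, p1 < p < 0 -> d p = F1 p) -> (forall p, p0 < p < p1 -> d p = F2 p) ->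
  continuous F1 p1 -> continuous F2 p1 ->
  (forall p p', p1 < p < 0 -> p0 < p' < p1 ->
     Rabs (Gam ^ 3 * d p - lam ^ 3 * d p' - gj * c) <= K * (Rpower (p - p1) al + Rpower (p1 - p') al)) ->
  Gam ^ 3 * F1 p1 - lam ^ 3 * F2 p1 = gj * c.
Proof.
  intros Hal Hp01 Hp1 HG Hl H1 H2 C1 C2 HB.
  assert (HG3 : 0 < Gam ^ 3) by (apply pow_lt; lra). assert (Hl3 : 0 < lam ^ 3) by (apply pow_lt; lra).
  set (r := Rmin (- p1) (p1 - p0)).
  assert (Hr1 := Rmin_l (- p1) (p1 - p0)). assert (Hr2 := Rmin_r (- p1) (p1 - p0)).
  assert (Hr : 0 < r) by (unfold r; apply Rmin_pos; lra). fold r in Hr1, Hr2.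
  apply Rminus_diag_uniq, (eq_0_of_small_near _ p1 (p1 + r) p1); try lra.
  intros eps He.
  destruct (continuous_eps_delta F1 p1 C1 (eps / (4 * Gam ^ 3))) as [d1 [Hd1 E1]].
  { apply Rdiv_lt_0_compat; lra. }
  destruct (continuous_eps_delta F2 p1 C2 (eps / (4 * lam ^ 3))) as [d2 [Hd2 E2]].
  { apply Rdiv_lt_0_compat; lra. }
  destruct (mul_Rpower_small al (2 * K) (eps / 2) Hal) as [d3 [Hd3 E3]]; [lra|].
  exists (Rmin d1 (Rmin d2 d3)). split; [repeat apply Rmin_pos; auto|].
  intros p Hp Hpd.
  assert (M1 := Rmin_l d1 (Rmin d2 d3)). assert (M2 := Rmin_r d1 (Rmin d2 d3)).
  assert (M3 := Rmin_l d2 d3). assert (M4 := Rmin_r d2 d3).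
  rewrite Rabs_right in Hpd by lra.
  set (p' := 2 * p1 - p). assert (Hp' : p0 < p' < p1) by (unfold p'; lra).
  assert (A1 := E1 p ltac:(rewrite Rabs_right; lra)).
  assert (A2 := E2 p' ltac:(unfold p'; rewrite Rabs_left; lra)).
  assert (A3 := E3 (p - p1) ltac:(lra) ltac:(lra)).
  assert (A4 := HB p p' ltac:(lra) Hp').
  replace (p1 - p') with (p - p1) in A4 by (unfold p'; ring).
  rewrite (H1 p), (H2 p') in A4 by lra.
  assert (A5 : K * (Rpower (p - p1) al + Rpower (p - p1) al) <= Rabs (2 * K) * Rpower (p - p1) al).
  { replace (K * _) with ((2 * K) * Rpower (p - p1) al) by ring.
    apply Rmult_le_compat_r; [apply Rlt_le, Rpower_pos | apply Rle_abs]. }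
  assert (B : Gam ^ 3 * Rabs (F1 p - F1 p1) + lam ^ 3 * Rabs (F2 p' - F2 p1) < eps / 2).
  { assert (Gam ^ 3 * Rabs (F1 p - F1 p1) < Gam ^ 3 * (eps / (4 * Gam ^ 3))) by (apply Rmult_lt_compat_l; lra).
    assert (lam ^ 3 * Rabs (F2 p' - F2 p1) < lam ^ 3 * (eps / (4 * lam ^ 3))) by (apply Rmult_lt_compat_l; lra).
    replace (Gam ^ 3 * (eps / (4 * Gam ^ 3))) with (eps / 4) in * by (field; lra).
    replace (lam ^ 3 * (eps / (4 * lam ^ 3))) with (eps / 4) in * by (field; lra). lra. }
  replace (Gam ^ 3 * F1 p1 - lam ^ 3 * F2 p1 - gj * c) with
    (- (Gam ^ 3 * (F1 p - F1 p1)) + lam ^ 3 * (F2 p' - F2 p1) + (Gam ^ 3 * F1 p - lam ^ 3 * F2 p' - gj * c))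
    by ring.
  apply Rle_lt_trans with (1 := Rabs_triang _ _).
  assert (T := Rabs_triang (- (Gam ^ 3 * (F1 p - F1 p1))) (lam ^ 3 * (F2 p' - F2 p1))).
  rewrite Rabs_Ropp, !Rabs_mult, !(Rabs_right (_ ^ 3)) in T by lra. lra.
Qed.

(** * Hoelder continuity in the plane *)

Definition dist2 (qa pa qb pb : R) : R := sqrt ((qa - qb) ^ 2 + (pa - pb) ^ 2).

Lemma dist2_le_abs qa pa qb pb : dist2 qa pa qb pb <= Rabs (qa - qb) + Rabs (pa - pb).
Proof.
  assert (H1 := Rabs_pos (qa - qb)). assert (H2 := Rabs_pos (pa - pb)).
  unfold dist2. rewrite <- (sqrt_Rsqr (Rabs (qa - qb) + Rabs (pa - pb))) by lra.
  apply sqrt_le_1_alt. unfold Rsqr.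
  rewrite <- (pow2_abs (qa - qb)), <- (pow2_abs (pa - pb)). nra.
Qed.

Lemma dist2_same_p qa qb p : dist2 qa p qb p = Rabs (qa - qb).
Proof.
  unfold dist2. replace ((qa - qb) ^ 2 + (p - p) ^ 2) with (Rsqr (qa - qb)) by (unfold Rsqr; ring).
  apply sqrt_Rsqr_abs.
Qed.

Lemma dist2_same_q q pa pb : dist2 q pa q pb = Rabs (pa - pb).
Proof.
  unfold dist2. replace ((q - q) ^ 2 + (pa - pb) ^ 2) with (Rsqr (pa - pb)) by (unfold Rsqr; ring).
  apply sqrt_Rsqr_abs.
Qed.

Lemma abs_q_le_dist2 qa pa qb pb : Rabs (qa - qb) <= dist2 qa pa qb pb.
Proof.
  rewrite <- (dist2_same_p _ _ pa). apply sqrt_le_1_alt.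
  assert (H := pow2_ge_0 (pa - pb)). replace ((pa - pa) ^ 2) with 0 by ring. lra.
Qed.

Lemma abs_p_le_dist2 qa pa qb pb : Rabs (pa - pb) <= dist2 qa pa qb pb.
Proof.
  rewrite <- (dist2_same_q qa). apply sqrt_le_1_alt.
  assert (H := pow2_ge_0 (qa - qb)). replace ((qa - qa) ^ 2) with 0 by ring. lra.
Qed.

Lemma dist2_pos qa pa qb pb : (qa, pa) <> (qb, pb) -> 0 < dist2 qa pa qb pb.
Proof.
  intros H. unfold dist2. apply sqrt_lt_R0.
  assert (H1 := pow2_ge_0 (qa - qb)). assert (H2 := pow2_ge_0 (pa - pb)).
  destruct (Req_dec qa qb) as [->|Hq].
  - assert (pa - pb <> 0) by (intro; apply H; f_equal; lra).
    assert (0 < (pa - pb) ^ 2) by (simpl; rewrite Rmult_1_r; apply Rsqr_pos_lt; auto).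
    lra.
  - assert (0 < (qa - qb) ^ 2) by (simpl; rewrite Rmult_1_r; apply Rsqr_pos_lt; lra).
    lra.
Qed.

Lemma holder_subset al (S S' : R -> R -> Prop) u :
  (forall q p, S q p -> S' q p) -> holder al S' u -> holder al S u.
Proof. intros HS [[M HM] [C HC]]. split; [exists M | exists C]; auto. Qed.

Lemma holder_ext al S (f g : R -> R -> R) : (forall q p, S q p -> f q p = g q p) ->
  holder al S g -> holder al S f.
Proof.
  intros E [[M HM] [C HC]]. split.
  - exists M. intros q p H. rewrite E; auto.
  - exists C. intros qa pa qb pb H1 H2 H3. rewrite !E; auto.
Qed.

Lemma holder_in_p al S u : holder al S u ->
  exists C, forall q pa pb, S q pa -> S q pb -> pa <> pb ->
    Rabs (u q pa - u q pb) <= C * Rpower (Rabs (pa - pb)) al.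
Proof.
  intros [_ [C HC]]. exists C. intros q pa pb H1 H2 H3.
  rewrite <- (dist2_same_q q pa pb). apply HC; auto. intro E; inversion E; auto.
Qed.

Lemma holder_continuous_q al (S : R -> R -> Prop) u p : 0 < al -> holder al S u ->
  (forall x, S x p) -> forall q, continuous (fun x => u x p) q.
Proof.
  intros Hal [_ [C HC]] HS q. apply continuity_pt_filterlim. intros eps Heps.
  destruct (mul_Rpower_small al C eps Hal Heps) as [del [Hdel Hd]].
  exists del; split; auto. intros x [[_ Hxq] Hdx]. simpl in *. unfold R_dist in *.
  apply Rle_lt_trans with (C * Rpower (dist2 x p q p) al).
  - apply HC; auto. intro E; inversion E; auto.
  - rewrite dist2_same_p. apply Rle_lt_trans with (Rabs C * Rpower (Rabs (x - q)) al).
    + apply Rmult_le_compat_r; [apply Rlt_le, Rpower_pos | apply Rle_abs].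
    + apply Hd; auto. apply Rabs_pos_lt. lra.
Qed.

Lemma holder_continuity_2d al a b u q p : 0 < al -> holder al (open_strip a b) u ->
  a < p < b -> continuity_2d_pt u q p.
Proof.
  intros Hal [_ [C HC]] Hp eps.
  destruct (mul_Rpower_small al C eps Hal (cond_pos eps)) as [del [Hdel Hd]].
  assert (Hr1 := Rmin_l (del / 2) (Rmin (p - a) (b - p))).
  assert (Hr2 := Rmin_r (del / 2) (Rmin (p - a) (b - p))).
  assert (Hr3 := Rmin_l (p - a) (b - p)). assert (Hr4 := Rmin_r (p - a) (b - p)).
  set (r := Rmin (del / 2) (Rmin (p - a) (b - p))) in *.
  assert (Hr : 0 < r) by (unfold r; repeat apply Rmin_pos; lra).
  exists (mkposreal r Hr). simpl. intros x y Hx Hy.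
  destruct (Req_dec x q) as [Exq|Hxq]; [destruct (Req_dec y p) as [Eyp|Hyp]|];
    [subst; rewrite Rminus_eq_0, Rabs_R0; apply cond_pos| |].
  all: assert (Hne : (x, y) <> (q, p)) by (intro E; inversion E; auto).
  all: apply Rabs_def2 in Hy.
  all: apply Rle_lt_trans with (C * Rpower (dist2 x y q p) al);
    [apply HC; unfold open_strip; auto; lra|].
  all: apply Rle_lt_trans with (Rabs C * Rpower (dist2 x y q p) al);
    [apply Rmult_le_compat_r; [apply Rlt_le, Rpower_pos | apply Rle_abs]|].
  all: apply Hd; [apply dist2_pos; auto|].
  all: apply Rle_lt_trans with (1 := dist2_le_abs _ _ _ _).
  all: assert (Rabs (y - p) < r) by (apply Rabs_def1; lra); lra.
Qed.

(* Near the diagonal d <= 1 the Lipschitz bound is the stronger one; far from it the sup bound. *)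
Lemma lipschitz_holder al (S : R -> R -> Prop) u M L : 0 < al < 1 ->
  (forall q p, S q p -> Rabs (u q p) <= M) ->
  (forall qa pa qb pb, S qa pa -> S qb pb -> Rabs (u qa pa - u qb pb) <= L * dist2 qa pa qb pb) ->
  holder al S u.
Proof.
  intros Hal HM HL. split; [exists M; auto|].
  exists (Rabs L + 2 * Rabs M). intros qa pa qb pb Ha Hb Hne.
  fold (dist2 qa pa qb pb). set (d := dist2 qa pa qb pb).
  assert (Hd : 0 < d) by (apply dist2_pos; auto).
  assert (HR := Rpower_pos d al). assert (HL0 := Rabs_pos L). assert (HM0 := Rabs_pos M).
  destruct (Rle_dec d 1) as [Hd1|Hd1].
  - assert (d <= Rpower d al) by (apply Rpower_ge_self; lra).
    apply Rle_trans with (Rabs L * d).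
    + apply Rle_trans with (L * d); [apply HL; auto | apply Rmult_le_compat_r; [lra | apply Rle_abs]].
    + assert (Rabs L * d <= Rabs L * Rpower d al) by (apply Rmult_le_compat_l; lra). nra.
  - assert (1 <= Rpower d al) by (rewrite <- (Rpower_O d) by lra; apply Rle_Rpower; lra).
    apply Rle_trans with (Rabs (u qa pa) + Rabs (u qb pb)).
    + unfold Rminus. rewrite <- (Rabs_Ropp (u qb pb)). apply Rabs_triang.
    + assert (H1 := HM _ _ Ha). assert (H2 := HM _ _ Hb). assert (M <= Rabs M) by apply Rle_abs.
      assert (2 * Rabs M <= 2 * Rabs M * Rpower d al) by nra. nra.
Qed.

Definition bounded_lipschitz (lo hi : R) (w : R -> R) : Prop := exists M L,
  (forall p, lo <= p <= hi -> Rabs (w p) <= M) /\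
  (forall pa pb, lo <= pa <= hi -> lo <= pb <= hi -> Rabs (w pa - w pb) <= L * Rabs (pa - pb)).

Lemma bounded_lipschitz_ext lo hi (w w' : R -> R) : (forall p, lo <= p <= hi -> w p = w' p) ->
  bounded_lipschitz lo hi w' -> bounded_lipschitz lo hi w.
Proof.
  intros E [M [L [HM HL]]]. exists M, L. split.
  - intros p Hp. rewrite E; auto.
  - intros pa pb Ha Hb. rewrite !E; auto.
Qed.

Lemma abs_hyperbolic_le_exp y R : Rabs y <= R -> Rabs (sinh y) <= exp R /\ Rabs (cosh y) <= exp R.
Proof.
  intros H. apply Rabs_le_between in H.
  assert (exp y <= exp R) by (destruct (Req_dec y R) as [->|]; [lra | apply Rlt_le, exp_increasing; lra]).
  assert (exp (- y) <= exp R) by (destruct (Req_dec (- y) R) as [->|]; [lra | apply Rlt_le, exp_increasing; lra]).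
  assert (H3 := exp_pos y). assert (H4 := exp_pos (- y)).
  unfold sinh, cosh. split; apply Rabs_le; split; lra.
Qed.

Lemma abs_affine_le m c lo hi p : lo <= p <= hi ->
  Rabs (m * p + c) <= Rabs m * (Rabs lo + Rabs hi) + Rabs c.
Proof.
  intros Hp. apply Rle_trans with (Rabs (m * p) + Rabs c); [apply Rabs_triang|].
  rewrite Rabs_mult. apply Rplus_le_compat_r, Rmult_le_compat_l; [apply Rabs_pos|].
  assert (H1 := Rabs_pos lo). assert (H2 := Rabs_pos hi).
  destruct (Rle_dec 0 p).
  - rewrite Rabs_right by lra. assert (H := Rle_abs hi). lra.
  - rewrite Rabs_left by lra. assert (H := Rabs_maj2 lo). lra.
Qed.

Lemma bounded_lipschitz_sinh_affine K m c lo hi : bounded_lipschitz lo hi (fun p => K * sinh (m * p + c)).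
Proof.
  set (R := Rabs m * (Rabs lo + Rabs hi) + Rabs c).
  assert (HR : forall p, lo <= p <= hi -> Rabs (m * p + c) <= R) by (intros; apply abs_affine_le; auto).
  exists (Rabs K * exp R), (Rabs (K * m) * exp R). split.
  - intros p Hp. rewrite Rabs_mult. apply Rmult_le_compat_l; [apply Rabs_pos|].
    apply (abs_hyperbolic_le_exp _ R), HR, Hp.
  - apply (lipschitz_of_bounded_derive _ (fun p => K * (m * cosh (m * p + c)))).
    + intros x _. apply is_derive_scal, is_derive_sinh_affine.
    + intros x Hx. rewrite !Rabs_mult, Rmult_assoc.
      do 2 (apply Rmult_le_compat_l; [apply Rabs_pos|]). apply (abs_hyperbolic_le_exp _ R), HR, Hx.
Qed.

Lemma bounded_lipschitz_cosh_affine K m c lo hi : bounded_lipschitz lo hi (fun p => K * cosh (m * p + c)).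
Proof.
  set (R := Rabs m * (Rabs lo + Rabs hi) + Rabs c).
  assert (HR : forall p, lo <= p <= hi -> Rabs (m * p + c) <= R) by (intros; apply abs_affine_le; auto).
  exists (Rabs K * exp R), (Rabs (K * m) * exp R). split.
  - intros p Hp. rewrite Rabs_mult. apply Rmult_le_compat_l; [apply Rabs_pos|].
    apply (abs_hyperbolic_le_exp _ R), HR, Hp.
  - apply (lipschitz_of_bounded_derive _ (fun p => K * (m * sinh (m * p + c)))).
    + intros x _. apply is_derive_scal, is_derive_cosh_affine.
    + intros x Hx. rewrite !Rabs_mult, Rmult_assoc.
      do 2 (apply Rmult_le_compat_l; [apply Rabs_pos|]). apply (abs_hyperbolic_le_exp _ R), HR, Hx.
Qed.

Lemma bounded_lipschitz_glue lo mid hi w1 w2 : lo <= mid <= hi ->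
  bounded_lipschitz mid hi w1 -> bounded_lipschitz lo mid w2 -> w1 mid = w2 mid ->
  bounded_lipschitz lo hi (fun p => if Rle_dec mid p then w1 p else w2 p).
Proof.
  intros Hp [M1 [L1 [HM1 HL1]]] [M2 [L2 [HM2 HL2]]] E.
  assert (A1 := Rabs_pos L1). assert (A2 := Rabs_pos L2).
  assert (A3 := Rle_abs L1). assert (A4 := Rle_abs L2).
  assert (A5 := Rle_abs M1). assert (A6 := Rle_abs M2).
  assert (A7 := Rabs_pos M1). assert (A8 := Rabs_pos M2).
  exists (Rabs M1 + Rabs M2), (Rabs L1 + Rabs L2). split.
  - intros p Hp'. destruct (Rle_dec mid p).
    + assert (H := HM1 p ltac:(lra)). lra.
    + assert (H := HM2 p ltac:(lra)). lra.
  - assert (G : forall pa pb, mid <= pa <= hi -> lo <= pb <= mid ->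
      Rabs (w1 pa - w2 pb) <= (Rabs L1 + Rabs L2) * Rabs (pa - pb)).
    { intros pa pb Ha Hb.
      replace (w1 pa - w2 pb) with ((w1 pa - w1 mid) + (w2 mid - w2 pb)) by (rewrite E; ring).
      apply Rle_trans with (1 := Rabs_triang _ _).
      assert (B1 := HL1 pa mid Ha ltac:(lra)). assert (B2 := HL2 mid pb ltac:(lra) Hb).
      rewrite (Rabs_right (pa - mid)) in B1 by lra. rewrite (Rabs_right (mid - pb)) in B2 by lra.
      rewrite (Rabs_right (pa - pb)) by lra.
      assert (L1 * (pa - mid) <= Rabs L1 * (pa - mid)) by (apply Rmult_le_compat_r; lra).
      assert (L2 * (mid - pb) <= Rabs L2 * (mid - pb)) by (apply Rmult_le_compat_r; lra).
      assert (0 <= Rabs L1 * (mid - pb)) by (apply Rmult_le_pos; lra).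
      assert (0 <= Rabs L2 * (pa - mid)) by (apply Rmult_le_pos; lra). nra. }
    intros pa pb Ha Hb. destruct (Rle_dec mid pa), (Rle_dec mid pb).
    + apply Rle_trans with (L1 * Rabs (pa - pb)); [apply HL1; lra|].
      apply Rmult_le_compat_r; [apply Rabs_pos | lra].
    + apply G; lra.
    + rewrite <- Rabs_Ropp, Ropp_minus_distr, <- (Rabs_Ropp (pa - pb)), Ropp_minus_distr. apply G; lra.
    + apply Rle_trans with (L2 * Rabs (pa - pb)); [apply HL2; lra|].
      apply Rmult_le_compat_r; [apply Rabs_pos | lra].
Qed.

Lemma cos_lipschitz x y : Rabs (cos x - cos y) <= Rabs (x - y).
Proof.
  rewrite <- (Rmult_1_l (Rabs (x - y))).
  apply (lipschitz_of_bounded_derive cos (fun t => - sin t) (Rmin x y) (Rmax x y)).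
  - intros; apply is_derive_cos.
  - intros t _. rewrite Rabs_Ropp. apply Rabs_le, SIN_bound.
  - split; [apply Rmin_l | apply Rmax_l].
  - split; [apply Rmin_r | apply Rmax_r].
Qed.

Lemma sin_lipschitz x y : Rabs (sin x - sin y) <= Rabs (x - y).
Proof.
  rewrite <- (Rmult_1_l (Rabs (x - y))).
  apply (lipschitz_of_bounded_derive sin cos (Rmin x y) (Rmax x y)).
  - intros; apply is_derive_sin.
  - intros t _. apply Rabs_le, COS_bound.
  - split; [apply Rmin_l | apply Rmax_l].
  - split; [apply Rmin_r | apply Rmax_r].
Qed.

Lemma holder_mul_lipschitz al lo hi (u w : R -> R) : 0 < al < 1 ->
  (forall x, Rabs (u x) <= 1) -> (forall x y, Rabs (u x - u y) <= Rabs (x - y)) ->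
  bounded_lipschitz lo hi w -> holder al (closed_strip lo hi) (fun q p => u q * w p).
Proof.
  intros Hal Hu1 Hu2 [M [L [HM HL]]].
  apply (lipschitz_holder al _ _ (Rabs M) (Rabs L + Rabs M)); auto.
  - intros q p Hp. rewrite Rabs_mult.
    assert (H1 := Hu1 q). assert (H2 := HM p Hp). assert (H3 := Rle_abs M).
    assert (H4 := Rabs_pos (u q)). assert (H5 := Rabs_pos (w p)). nra.
  - intros qa pa qb pb Ha Hb. unfold closed_strip in *.
    replace (u qa * w pa - u qb * w pb) with (u qa * (w pa - w pb) + w pb * (u qa - u qb)) by ring.
    apply Rle_trans with (1 := Rabs_triang _ _). rewrite !Rabs_mult.
    assert (H1 := Hu1 qa). assert (H2 := HM pb Hb). assert (H3 := Rle_abs M).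
    assert (H6 := HL pa pb Ha Hb). assert (H7 := Hu2 qa qb).
    assert (D1 := abs_q_le_dist2 qa pa qb pb). assert (D2 := abs_p_le_dist2 qa pa qb pb).
    assert (P1 := Rabs_pos (u qa)). assert (P2 := Rabs_pos (w pb)).
    assert (P3 := Rabs_pos (w pa - w pb)). assert (P4 := Rabs_pos (u qa - u qb)).
    assert (P5 := Rabs_pos L). assert (P6 := Rle_abs L). assert (P7 := Rabs_pos (pa - pb)).
    assert (E1 : Rabs (u qa) * Rabs (w pa - w pb) <= Rabs L * dist2 qa pa qb pb).
    { apply Rle_trans with (1 * Rabs (w pa - w pb)); [apply Rmult_le_compat_r; lra|].
      apply Rle_trans with (Rabs L * Rabs (pa - pb)); [|apply Rmult_le_compat_l; lra].
      apply Rle_trans with (L * Rabs (pa - pb)); [lra | apply Rmult_le_compat_r; lra]. }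
    assert (E2 : Rabs (w pb) * Rabs (u qa - u qb) <= Rabs M * dist2 qa pa qb pb).
    { apply Rmult_le_compat; lra. }
    lra.
Qed.

Lemma holder_open_mul_lipschitz al lo hi (u : R -> R) (f : R -> R -> R) (w : R -> R) : 0 < al < 1 ->
  (forall x, Rabs (u x) <= 1) -> (forall x y, Rabs (u x - u y) <= Rabs (x - y)) ->
  bounded_lipschitz lo hi w -> (forall q p, lo < p < hi -> f q p = u q * w p) ->
  holder al (open_strip lo hi) f.
Proof.
  intros Hal H1 H2 Hw E. apply (holder_ext _ _ _ (fun q p => u q * w p)); [exact E|].
  apply (holder_subset _ _ (closed_strip lo hi)).
  - unfold open_strip, closed_strip. intros; lra.
  - apply holder_mul_lipschitz; auto.
Qed.

(** * Integrals over a period *)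

(* Coquelicot's integration lemmas at [R]: [apply] alone cannot infer the module structure. *)
Lemma RInt_correct_R (g : R -> R) a b : ex_RInt g a b -> is_RInt g a b (RInt g a b).
Proof. exact (@RInt_correct R_CompleteNormedModule g a b). Qed.

Lemma is_RInt_ext_R (g h : R -> R) a b l : (forall x, Rmin a b < x < Rmax a b -> g x = h x) ->
  is_RInt g a b l -> is_RInt h a b l.
Proof. exact (@is_RInt_ext R_NormedModule g h a b l). Qed.

Lemma RInt_scal_R (f : R -> R) a b c : ex_RInt f a b -> RInt (fun x => c * f x) a b = c * RInt f a b.
Proof. exact (@RInt_scal R_CompleteNormedModule f a b c). Qed.

Lemma is_RInt_const_R a b c : is_RInt (fun _ => c) a b ((b - a) * c).
Proof. exact (@is_RInt_const R_NormedModule a b c). Qed.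

Lemma is_RInt_lin_comb (g h : R -> R) a b c d Ig Ih : is_RInt g a b Ig -> is_RInt h a b Ih ->
  is_RInt (fun x => c * g x + d * h x) a b (c * Ig + d * Ih).
Proof.
  intros Hg Hh. apply (@is_RInt_plus R_NormedModule (fun y => scal c (g y)) (fun y => scal d (h y)));
    apply (@is_RInt_scal R_NormedModule); auto.
Qed.

Lemma is_RInt_lin_comb0 (g h : R -> R) a b c d : is_RInt g a b 0 -> is_RInt h a b 0 ->
  is_RInt (fun x => c * g x + d * h x) a b 0.
Proof. intros Hg Hh. replace 0 with (c * 0 + d * 0) by ring. apply is_RInt_lin_comb; auto. Qed.

Lemma is_RInt_eq (f : R -> R) a b l1 l2 : is_RInt f a b l1 -> is_RInt f a b l2 -> l1 = l2.
Proof. intros H1 H2. rewrite <- (is_RInt_unique _ _ _ _ H1). apply is_RInt_unique; auto. Qed.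

Lemma ex_RInt_continuous_R (g : R -> R) a b : (forall x, continuous g x) -> ex_RInt g a b.
Proof. intros H. apply (@ex_RInt_continuous R_CompleteNormedModule). intros; apply H. Qed.

Lemma ex_RInt_mul_continuous (F C : R -> R) a b : (forall x, continuous F x) ->
  (forall x, continuous C x) -> ex_RInt (fun x => F x * C x) a b.
Proof. intros H1 H2. apply ex_RInt_continuous_R. intros x. apply (continuous_mult F C); auto. Qed.

Lemma ex_RInt_mul_derivable (f g : R -> R) a b : (forall x, continuous f x) ->
  (forall x, ex_derive g x) -> ex_RInt (fun x => f x * g x) a b.
Proof. intros Hf Hg. apply ex_RInt_mul_continuous; auto. intros x. apply (ex_derive_continuous g); auto. Qed.

Lemma continuous_cos_mul r x : continuous (fun q => cos (r * q)) x.
Proof. apply (ex_derive_continuous (fun q => cos (r * q))). auto_derive; auto. Qed.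

Lemma continuous_sin_mul r x : continuous (fun q => sin (r * q)) x.
Proof. apply (ex_derive_continuous (fun q => sin (r * q))). auto_derive; auto. Qed.

Lemma RInt_ge_const g a b K : a <= b -> ex_RInt g a b -> (forall x, a < x < b -> K <= g x) ->
  (b - a) * K <= RInt g a b.
Proof.
  intros Hab Hg H. replace ((b - a) * K) with (RInt (fun _ => K) a b) by (rewrite RInt_const; reflexivity).
  apply RInt_le; auto. apply ex_RInt_const.
Qed.

Lemma abs_RInt_period_le (f : R -> R) M : ex_RInt f (- PI) PI -> (forall t, Rabs (f t) <= M) ->
  Rabs (RInt f (- PI) PI) <= 2 * PI * M.
Proof.
  intros H1 H2. assert (HP := PI_RGT_0). replace (2 * PI * M) with ((PI - - PI) * M) by ring.
  apply abs_RInt_le_const; auto. lra.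
Qed.

Lemma RInt_odd (g : R -> R) a : ex_RInt g (- a) a -> (forall x, g (- x) = - g x) ->
  RInt g (- a) a = 0.
Proof.
  intros Hg Hodd.
  assert (E1 := @RInt_comp_lin R_CompleteNormedModule g (-1) 0 a (- a)).
  replace (-1 * a + 0) with (- a) in E1 by ring. replace (-1 * - a + 0) with a in E1 by ring.
  specialize (E1 Hg).
  rewrite (RInt_ext _ g) in E1.
  - rewrite <- (@opp_RInt_swap R_CompleteNormedModule g) in E1 by exact Hg.
    change (- RInt g (- a) a = RInt g (- a) a) in E1. lra.
  - intros x _. replace (-1 * x + 0) with (- x) by ring. rewrite Hodd. change (-1 * - g x = g x). ring.
Qed.

Lemma sin_nat_mul_PI (n : nat) : sin (INR n * PI) = 0.
Proof. apply sin_eq_0_1. exists (Z.of_nat n). rewrite <- INR_IZR_INZ. reflexivity. Qed.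

Lemma is_RInt_cos_nat (n : nat) : (1 <= n)%nat -> is_RInt (fun q => cos (INR n * q)) (- PI) PI 0.
Proof.
  intros Hn. assert (Hr : INR n <> 0) by (apply not_0_INR; lia).
  assert (H := @is_RInt_derive R_CompleteNormedModule (fun q => sin (INR n * q) / INR n)
    (fun q => cos (INR n * q)) (- PI) PI).
  assert (E : sin (INR n * PI) / INR n + - (sin (INR n * - PI) / INR n) = 0).
  { replace (INR n * - PI) with (- (INR n * PI)) by ring. rewrite sin_neg, sin_nat_mul_PI. field; auto. }
  simpl in H. unfold minus, plus, opp in H; simpl in H. rewrite E in H. apply H.
  - intros x _. auto_derive; auto. field; auto.
  - intros x _. apply continuous_cos_mul.
Qed.

Lemma is_RInt_cos_cos_nat (k : nat) :
  is_RInt (fun q => cos q * cos (INR k * q)) (- PI) PI (if Nat.eq_dec k 1 then PI else 0).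
Proof.
  destruct (Nat.eq_dec k 1) as [->|Hk].
  - replace PI with ((1 / 2) * 0 + (1 / 2) * ((PI - - PI) * 1)) at 3 by field.
    apply (is_RInt_ext_R (fun q => (1 / 2) * cos (INR 2 * q) + (1 / 2) * 1)).
    + intros x _. simpl. replace ((1 + 1) * x) with (2 * x) by ring. rewrite cos_2a_cos, Rmult_1_l. field.
    + apply is_RInt_lin_comb; [apply is_RInt_cos_nat; lia | apply is_RInt_const_R].
  - destruct k as [|k].
    + apply (is_RInt_ext_R (fun q => cos (INR 1 * q))); [|apply is_RInt_cos_nat; lia].
      intros x _. simpl. rewrite Rmult_0_l, cos_0, Rmult_1_l, Rmult_1_r. reflexivity.
    + apply (is_RInt_ext_R (fun q => (1 / 2) * cos (INR (S (S k)) * q) + (1 / 2) * cos (INR k * q))).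
      * intros x _. rewrite !S_INR.
        replace ((INR k + 1 + 1) * x) with ((INR k + 1) * x + x) by ring.
        replace (INR k * x) with ((INR k + 1) * x - x) by ring.
        rewrite cos_plus, cos_minus. field.
      * apply is_RInt_lin_comb0; apply is_RInt_cos_nat; lia.
Qed.

(** * Uniqueness for cosine series *)

(* This is [e + cos (x - x0)] (see [peak_eq]), written so that its powers are visibly
   trigonometric polynomials. *)
Definition peak (e x0 x : R) : R := e + cos x0 * cos x + sin x0 * sin x.

Lemma peak_eq e x0 x : peak e x0 x = e + cos (x - x0).
Proof. unfold peak. rewrite cos_minus. ring. Qed.

Section CosineOrthogonal.
Variable f : R -> R.
Hypothesis f_cont : forall x, continuous f x.
Hypothesis f_even : forall x, f (- x) = f x.
Hypothesis f_cos : forall k : nat, RInt (fun x => f x * cos (INR k * x)) (- PI) PI = 0.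

Lemma is_RInt_mul_cos_Z (m : Z) : is_RInt (fun x => f x * cos (IZR m * x)) (- PI) PI 0.
Proof.
  assert (Hn : forall n : nat, is_RInt (fun x => f x * cos (INR n * x)) (- PI) PI 0).
  { intros n. rewrite <- (f_cos n). apply RInt_correct_R, ex_RInt_mul_derivable; auto.
    intros; auto_derive; auto. }
  destruct (Z_le_gt_dec 0 m).
  - specialize (Hn (Z.to_nat m)). rewrite INR_IZR_INZ, Z2Nat.id in Hn by lia. exact Hn.
  - specialize (Hn (Z.to_nat (- m))). rewrite INR_IZR_INZ, Z2Nat.id in Hn by lia.
    apply (is_RInt_ext_R (fun x => f x * cos (IZR (- m) * x))); auto.
    intros x _. rewrite opp_IZR, Ropp_mult_distr_l_reverse, cos_neg. reflexivity.
Qed.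

Lemma is_RInt_mul_sin r : is_RInt (fun x => f x * sin (r * x)) (- PI) PI 0.
Proof.
  assert (Hg : ex_RInt (fun x => f x * sin (r * x)) (- PI) PI).
  { apply ex_RInt_mul_derivable; auto. intros; auto_derive; auto. }
  rewrite <- (RInt_odd _ PI Hg).
  - apply RInt_correct_R; auto.
  - intros x. rewrite f_even, Ropp_mult_distr_r_reverse, sin_neg. ring.
Qed.

(* Multiplying by [peak] shifts frequencies by at most one, so induction on the power works
   simultaneously for all cosine and sine frequencies. *)
Lemma is_RInt_mul_peak_pow e x0 (k : nat) : forall m : Z,
  is_RInt (fun x => f x * peak e x0 x ^ k * cos (IZR m * x)) (- PI) PI 0 /\
  is_RInt (fun x => f x * peak e x0 x ^ k * sin (IZR m * x)) (- PI) PI 0.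
Proof.
  induction k as [|k IH]; intros m.
  - split.
    + apply (is_RInt_ext_R (fun x => f x * cos (IZR m * x))); [intros; simpl; ring | apply is_RInt_mul_cos_Z].
    + apply (is_RInt_ext_R (fun x => f x * sin (IZR m * x))); [intros; simpl; ring | apply is_RInt_mul_sin].
  - destruct (IH m) as [Cm Sm]. destruct (IH (m + 1)%Z) as [Cp Sp]. destruct (IH (m - 1)%Z) as [Cn Sn].
    rewrite plus_IZR in Cp, Sp. rewrite minus_IZR in Cn, Sn.
    set (F := fun x => f x * peak e x0 x ^ k) in *.
    assert (Hplus : forall x, (IZR m + 1) * x = IZR m * x + x) by (intros; ring).
    assert (Hminus : forall x, (IZR m - 1) * x = IZR m * x - x) by (intros; ring).
    split.
    + apply (is_RInt_ext_R (fun x => e * (F x * cos (IZR m * x)) + 1 * (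
          (cos x0 / 2) * (F x * cos ((IZR m + 1) * x)) + 1 * (
          (cos x0 / 2) * (F x * cos ((IZR m - 1) * x)) + 1 * (
          (sin x0 / 2) * (F x * sin ((IZR m + 1) * x)) +
          (- (sin x0 / 2)) * (F x * sin ((IZR m - 1) * x))))))).
      * intros x _. unfold F. simpl. rewrite Hplus, Hminus, cos_plus, cos_minus, sin_plus, sin_minus.
        unfold peak. generalize ((e + cos x0 * cos x + sin x0 * sin x) ^ k) (cos (IZR m * x))
          (sin (IZR m * x)) (f x) (cos x) (sin x). intros. field.
      * do 3 (apply is_RInt_lin_comb0; [assumption|]). apply is_RInt_lin_comb0; assumption.
    + apply (is_RInt_ext_R (fun x => e * (F x * sin (IZR m * x)) + 1 * (
          (cos x0 / 2) * (F x * sin ((IZR m + 1) * x)) + 1 * (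
          (cos x0 / 2) * (F x * sin ((IZR m - 1) * x)) + 1 * (
          (sin x0 / 2) * (F x * cos ((IZR m - 1) * x)) +
          (- (sin x0 / 2)) * (F x * cos ((IZR m + 1) * x))))))).
      * intros x _. unfold F. simpl. rewrite Hplus, Hminus, cos_plus, cos_minus, sin_plus, sin_minus.
        unfold peak. generalize ((e + cos x0 * cos x + sin x0 * sin x) ^ k) (cos (IZR m * x))
          (sin (IZR m * x)) (f x) (cos x) (sin x). intros. field.
      * do 3 (apply is_RInt_lin_comb0; [assumption|]). apply is_RInt_lin_comb0; assumption.
Qed.

Lemma RInt_mul_peak_pow e x0 k : RInt (fun x => f x * peak e x0 x ^ k) (- PI) PI = 0.
Proof.
  apply is_RInt_unique. destruct (is_RInt_mul_peak_pow e x0 k 0%Z) as [H _].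
  revert H. apply is_RInt_ext_R. intros x _. rewrite Rmult_0_l, cos_0. ring.
Qed.

End CosineOrthogonal.

Lemma cos_le_cos_abs t u : 0 <= u <= Rabs t -> Rabs t <= PI -> cos t <= cos u.
Proof.
  intros Hu Ht. assert (E : cos t = cos (Rabs t)).
  { destruct (Rle_dec 0 t); [rewrite Rabs_right | rewrite Rabs_left, cos_neg]; auto; lra. }
  rewrite E. destruct (Req_dec u (Rabs t)) as [->|Hne]; [lra|].
  apply Rlt_le, cos_decreasing_1; lra.
Qed.

Section PeakBounds.
Variables x0 eta : R.
Hypothesis eta_pos : 0 < eta.
Hypothesis eta_le_1 : eta <= 1.
Hypothesis x0_inside : - PI + 2 * eta <= x0 <= PI - 2 * eta.

Let e := (1 - cos eta) / 2.

Lemma peak_level_pos : 0 < e.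
Proof.
  assert (HPI := PI2_3_2). unfold e.
  assert (cos eta < 1) by (rewrite <- cos_0; apply cos_decreasing_1; lra). lra.
Qed.

Lemma peak_near_pos x : Rabs (x - x0) <= eta -> 0 < peak e x0 x.
Proof.
  intros Hx. assert (HPI := PI2_3_2). assert (He := peak_level_pos). rewrite peak_eq.
  assert (cos eta <= cos (x - x0)).
  { assert (E : cos (x - x0) = cos (Rabs (x - x0))).
    { destruct (Rle_dec 0 (x - x0)); [rewrite Rabs_right | rewrite Rabs_left, cos_neg]; auto; lra. }
    rewrite E. apply cos_le_cos_abs; rewrite (Rabs_right eta) by lra; [split; [apply Rabs_pos|]|]; lra. }
  assert (0 < cos eta) by (apply cos_gt_0; lra). lra.
Qed.

Lemma peak_far_le_1 x : - PI <= x <= PI -> eta <= Rabs (x - x0) -> Rabs (peak e x0 x) <= 1.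
Proof.
  intros Hx Hd. assert (HPI := PI2_3_2). rewrite peak_eq.
  assert (Hc : cos (x - x0) <= cos eta).
  { destruct (Rle_dec (Rabs (x - x0)) PI) as [Hle|Hgt].
    - apply cos_le_cos_abs; lra.
    - assert (E : cos (x - x0) = cos (2 * PI - Rabs (x - x0))).
      { rewrite (cos_minus (2 * PI)), cos_2PI, sin_2PI.
        destruct (Rle_dec 0 (x - x0)); [rewrite Rabs_right | rewrite Rabs_left, cos_neg]; lra. }
      assert (Rabs (x - x0) <= 2 * PI - 2 * eta).
      { destruct (Rle_dec 0 (x - x0)); [rewrite Rabs_right | rewrite Rabs_left]; lra. }
      rewrite E. apply cos_le_cos_abs; rewrite Rabs_right by lra; lra. }
  assert (H := COS_bound (x - x0)). assert (0 < cos eta) by (apply cos_gt_0; lra).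
  assert (H1 := COS_bound eta). apply Rabs_le. unfold e. split; lra.
Qed.

Lemma mul_peak_pow_ge (f : R -> R) M k x : (forall x, Rabs (f x) <= M) ->
  (forall x, Rabs (x - x0) <= eta -> 0 < f x) -> - PI <= x <= PI -> - M <= f x * peak e x0 x ^ k.
Proof.
  intros HM Hf Hx. destruct (Rle_dec (Rabs (x - x0)) eta).
  - assert (0 <= M) by (apply Rle_trans with (Rabs (f x)); [apply Rabs_pos | auto]).
    assert (0 < f x) by auto.
    assert (0 <= peak e x0 x ^ k) by (apply pow_le, Rlt_le, peak_near_pos; lra).
    assert (0 <= f x * peak e x0 x ^ k) by (apply Rmult_le_pos; lra). lra.
  - assert (Rabs (peak e x0 x ^ k) <= 1).
    { rewrite <- RPow_abs, <- (pow1 k). apply pow_incr.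
      split; [apply Rabs_pos | apply peak_far_le_1; lra]. }
    assert (Hprod : Rabs (f x * peak e x0 x ^ k) <= M).
    { rewrite Rabs_mult, <- (Rmult_1_r M). apply Rmult_le_compat; auto; apply Rabs_pos. }
    apply Rabs_le_between in Hprod. lra.
Qed.

End PeakBounds.

Lemma RInt_bump_lower_bound (g : R -> R) x0 eta M Y : 0 < eta ->
  - PI <= x0 - eta -> x0 + eta <= PI -> (forall a b, ex_RInt g a b) ->
  (forall x, - PI <= x <= PI -> eta <= Rabs (x - x0) -> - M <= g x) ->
  (forall x, Rabs (x - x0) <= eta -> Y <= g x) ->
  2 * eta * Y - (2 * PI - 2 * eta) * M <= RInt g (- PI) PI.
Proof.
  intros Heta Hl Hr Hg Hout Hin.
  assert (C1 := @RInt_Chasles R_CompleteNormedModule g (- PI) (x0 - eta) PI (Hg _ _) (Hg _ _)).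
  assert (C2 := @RInt_Chasles R_CompleteNormedModule g (x0 - eta) (x0 + eta) PI (Hg _ _) (Hg _ _)).
  change plus with Rplus in C1, C2. simpl in C1, C2.
  assert ((x0 - eta - - PI) * (- M) <= RInt g (- PI) (x0 - eta)).
  { apply RInt_ge_const; [lra | apply Hg|]. intros x Hx. apply Hout; [lra | rewrite Rabs_left; lra]. }
  assert ((PI - (x0 + eta)) * (- M) <= RInt g (x0 + eta) PI).
  { apply RInt_ge_const; [lra | apply Hg|]. intros x Hx. apply Hout; [lra | rewrite Rabs_right; lra]. }
  assert ((x0 + eta - (x0 - eta)) * Y <= RInt g (x0 - eta) (x0 + eta)).
  { apply RInt_ge_const; [lra | apply Hg|]. intros x Hx. apply Hin, Rabs_le. lra. }
  lra.
Qed.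

Lemma exists_nat_gt r : exists n : nat, r < INR n.
Proof.
  destruct (archimed (Rabs r)) as [H1 _].
  assert (Hz : (0 < up (Rabs r))%Z) by (apply lt_0_IZR; assert (H := Rabs_pos r); lra).
  exists (Z.to_nat (up (Rabs r))). rewrite INR_IZR_INZ, Z2Nat.id by lia.
  assert (H := Rle_abs r). lra.
Qed.

Lemma RInt_bump_pow_pos (g : nat -> R -> R) x0 eta M y r : 0 < eta -> 0 < y -> 0 < r -> 0 <= M ->
  - PI <= x0 - eta -> x0 + eta <= PI -> (forall k a b, ex_RInt (g k) a b) ->
  (forall k x, - PI <= x <= PI -> eta <= Rabs (x - x0) -> - M <= g k x) ->
  (forall k x, Rabs (x - x0) <= eta -> y * (1 + r) ^ k <= g k x) ->
  exists k, 0 < RInt (g k) (- PI) PI.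
Proof.
  intros Heta Hy Hr HM Hl Hh Hg Hout Hin. assert (HPI := PI_RGT_0).
  assert (Hpos : 0 < 2 * eta * y * r) by (repeat apply Rmult_lt_0_compat; lra).
  destruct (exists_nat_gt (2 * PI * M / (2 * eta * y * r))) as [k Hk]. exists k.
  assert (B := RInt_bump_lower_bound (g k) x0 eta M (y * (1 + r) ^ k) Heta Hl Hh (Hg k)
    (Hout k) (Hin k)).
  assert (Hb := poly k r Hr).
  assert (Hk' : 2 * PI * M < 2 * eta * y * r * INR k).
  { apply Rmult_lt_compat_l with (r := 2 * eta * y * r) in Hk; auto.
    replace (2 * eta * y * r * (2 * PI * M / (2 * eta * y * r))) with (2 * PI * M) in Hk; [lra|].
    field. repeat split; lra. }
  assert (2 * eta * y * (1 + INR k * r) <= 2 * eta * y * (1 + r) ^ k).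
  { apply Rmult_le_compat_l; auto. apply Rmult_le_pos; lra. }
  assert (0 <= eta * M) by (apply Rmult_le_pos; lra).
  nra.
Qed.

(* The powers of the peak concentrate at x0, where f > 0, and so cannot be orthogonal to f. *)
Lemma cos_orthogonal_not_pos (f : R -> R) x0 M : (forall x, continuous f x) -> (forall x, f (- x) = f x) ->
  (forall k : nat, RInt (fun x => f x * cos (INR k * x)) (- PI) PI = 0) ->
  (forall x, Rabs (f x) <= M) -> - PI < x0 < PI -> ~ 0 < f x0.
Proof.
  intros f_cont f_even f_cos HM Hx0 Hf0. assert (HPI := PI2_3_2).
  assert (HM0 : 0 <= M) by (apply Rle_trans with (Rabs (f x0)); [apply Rabs_pos | auto]).
  set (y := f x0 / 2). assert (Hy : 0 < y) by (unfold y; lra).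
  destruct (continuous_eps_delta f x0 (f_cont x0) y Hy) as [d1 [Hd1 H1]].
  assert (Hf : forall x, Rabs (x - x0) < d1 -> y < f x).
  { intros x Hx. specialize (H1 x Hx). apply Rabs_def2 in H1. unfold y in *. lra. }
  set (eta := Rmin (Rmin (d1 / 2) 1) (Rmin ((x0 + PI) / 2) ((PI - x0) / 2))).
  assert (Heta : 0 < eta) by (unfold eta; repeat apply Rmin_pos; lra).
  assert (He1 := Rmin_l (Rmin (d1 / 2) 1) (Rmin ((x0 + PI) / 2) ((PI - x0) / 2))).
  assert (He2 := Rmin_r (Rmin (d1 / 2) 1) (Rmin ((x0 + PI) / 2) ((PI - x0) / 2))).
  assert (He3 := Rmin_l (d1 / 2) 1). assert (He4 := Rmin_r (d1 / 2) 1).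
  assert (He5 := Rmin_l ((x0 + PI) / 2) ((PI - x0) / 2)).
  assert (He6 := Rmin_r ((x0 + PI) / 2) ((PI - x0) / 2)).
  fold eta in He1, He2.
  set (e := (1 - cos eta) / 2).
  assert (He : 0 < e) by (apply (peak_level_pos x0); lra).
  assert (Hpkc : continuous (peak e x0) x0).
  { apply (ex_derive_continuous (peak e x0)). unfold peak. auto_derive. auto. }
  destruct (continuous_eps_delta (peak e x0) x0 Hpkc (e / 2)) as [d2 [Hd2 H2]]; [lra|].
  assert (Hpeak : forall x, Rabs (x - x0) < d2 -> 1 + e / 2 < peak e x0 x).
  { intros x Hx. specialize (H2 x Hx). rewrite (peak_eq _ _ x0), Rminus_eq_0, cos_0 in H2.
    apply Rabs_def2 in H2. lra. }
  set (eta' := Rmin eta (d2 / 2)).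
  assert (Hm1 := Rmin_l eta (d2 / 2)). assert (Hm2 := Rmin_r eta (d2 / 2)). fold eta' in Hm1, Hm2.
  assert (Heta' : 0 < eta') by (unfold eta'; apply Rmin_pos; lra).
  set (g := fun (k : nat) x => f x * peak e x0 x ^ k).
  assert (Hout : forall k x, - PI <= x <= PI -> eta' <= Rabs (x - x0) -> - M <= g k x).
  { intros k x Hx _. apply (mul_peak_pow_ge x0 eta); auto; try lra.
    intros z Hz. apply Rlt_trans with y; auto. apply Hf. lra. }
  assert (Hin : forall k x, Rabs (x - x0) <= eta' -> y * (1 + e / 2) ^ k <= g k x).
  { intros k x Hx. unfold g. apply Rmult_le_compat; [lra | apply pow_le; lra | apply Rlt_le, Hf; lra|].
    apply pow_incr. split; [lra | apply Rlt_le, Hpeak; lra]. }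
  assert (Hg : forall k a b, ex_RInt (g k) a b).
  { intros k a b. apply ex_RInt_mul_derivable; auto. intros x. unfold peak. auto_derive. auto. }
  destruct (RInt_bump_pow_pos g x0 eta' M y (e / 2) Heta' Hy ltac:(lra) HM0 ltac:(lra) ltac:(lra)
    Hg Hout Hin) as [k Hk].
  unfold g in Hk. rewrite (RInt_mul_peak_pow f f_cont f_even f_cos e x0 k) in Hk. lra.
Qed.

Lemma cos_orthogonal_zero (f : R -> R) M : (forall x, continuous f x) -> (forall x, f (- x) = f x) ->
  (forall k : nat, RInt (fun x => f x * cos (INR k * x)) (- PI) PI = 0) ->
  (forall x, Rabs (f x) <= M) -> forall x, - PI < x < PI -> f x = 0.
Proof.
  intros Hc He Hk HM x Hx.
  destruct (Rtotal_order (f x) 0) as [Hlt|[Heq|Hgt]]; auto; exfalso.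
  - apply (cos_orthogonal_not_pos (fun x => - f x) x M); auto; try lra.
    + intros z. apply (continuous_opp f); auto.
    + intros z. rewrite He; auto.
    + intros k. apply is_RInt_unique.
      assert (H0 : is_RInt (fun z => f z * cos (INR k * z)) (- PI) PI 0).
      { rewrite <- (Hk k). apply RInt_correct_R, ex_RInt_mul_derivable; auto. intros; auto_derive; auto. }
      apply (is_RInt_ext_R (fun z => -1 * (f z * cos (INR k * z)) + 0 * (f z * cos (INR k * z)))).
      * intros; ring.
      * apply is_RInt_lin_comb0; auto.
    + intros z. rewrite Rabs_Ropp; auto.
  - apply (cos_orthogonal_not_pos f x M); auto.
Qed.

Lemma periodic_nat (f : R -> R) : (forall x, f (x + 2 * PI) = f x) ->
  forall (n : nat) x, f (x + 2 * PI * INR n) = f x /\ f (x - 2 * PI * INR n) = f x.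
Proof.
  intros H n. induction n as [|n IH]; intros x.
  - simpl. rewrite Rmult_0_r, Rplus_0_r, Rminus_0_r. auto.
  - rewrite S_INR. split.
    + replace (x + 2 * PI * (INR n + 1)) with ((x + 2 * PI * INR n) + 2 * PI) by ring.
      rewrite H. apply IH.
    + rewrite <- (H (x - 2 * PI * (INR n + 1))).
      replace (x - 2 * PI * (INR n + 1) + 2 * PI) with (x - 2 * PI * INR n) by ring. apply IH.
Qed.

Lemma periodic_Z (f : R -> R) : (forall x, f (x + 2 * PI) = f x) ->
  forall (z : Z) x, f (x + 2 * PI * IZR z) = f x.
Proof.
  intros H z x. destruct (Z_le_gt_dec 0 z).
  - rewrite <- (Z2Nat.id z), <- INR_IZR_INZ by lia. apply periodic_nat; auto.
  - replace z with (- Z.of_nat (Z.to_nat (- z)))%Z by lia.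
    rewrite opp_IZR, <- INR_IZR_INZ, Ropp_mult_distr_r_reverse. apply periodic_nat; auto.
Qed.

Lemma periodic_zero (f : R -> R) : (forall x, f (x + 2 * PI) = f x) ->
  (forall x, - PI < x < PI -> f x = 0) -> continuous f PI -> forall x, f x = 0.
Proof.
  intros Hp Hz Hc. assert (HP := PI_RGT_0).
  assert (HPI : f PI = 0).
  { apply (eq_0_of_small_near _ (- PI) PI PI); try lra. intros eps He.
    destruct (continuous_eps_delta f PI Hc eps He) as [d [Hd H]]. exists d; split; auto.
    intros p Hp' Hpd. specialize (H p Hpd). rewrite Hz, Rminus_0_l, Rabs_Ropp in H; auto. }
  intros x. destruct (archimed ((x + PI) / (2 * PI))) as [H1 H2].
  set (z := up ((x + PI) / (2 * PI))) in *.
  set (r := x - 2 * PI * IZR (z - 1)).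
  assert (Hr : - PI <= r < PI).
  { unfold r. rewrite minus_IZR.
    assert ((x + PI) / (2 * PI) * (2 * PI) = x + PI) by (field; lra). split; nra. }
  replace x with (r + 2 * PI * IZR (z - 1)) by (unfold r; ring).
  rewrite periodic_Z; auto.
  destruct (Req_dec r (- PI)) as [->|Hne].
  - rewrite <- Hp. replace (- PI + 2 * PI) with PI by ring. auto.
  - apply Hz. lra.
Qed.

Lemma Derive_periodic (F : R -> R) : (forall x, F (x + 2 * PI) = F x) -> (forall x, ex_derive F x) ->
  Derive F PI = Derive F (- PI).
Proof.
  intros Hp Hd. symmetry. apply is_derive_unique.
  apply (is_derive_ext (fun x => F (x + 2 * PI))); [intros; apply Hp|].
  replace (Derive F PI) with (scal 1 (Derive F PI)) by apply (@scal_one R_Ring R_ModuleSpace).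
  apply (is_derive_comp F (fun x => x + 2 * PI)).
  - replace (- PI + 2 * PI) with PI by ring. apply Derive_correct; auto.
  - auto_derive; auto.
Qed.

Lemma is_RInt_derive_mult (u u' v v' : R -> R) a b :
  (forall x, is_derive u x (u' x)) -> (forall x, is_derive v x (v' x)) ->
  (forall x, continuous u' x) -> (forall x, continuous v' x) ->
  is_RInt (fun x => u' x * v x + u x * v' x) a b (u b * v b - u a * v a).
Proof.
  intros Hu Hv Cu Cv.
  assert (Cu0 : forall x, continuous u x) by (intros; apply (ex_derive_continuous u); eexists; apply Hu).
  assert (Cv0 : forall x, continuous v x) by (intros; apply (ex_derive_continuous v); eexists; apply Hv).
  apply (@is_RInt_derive R_CompleteNormedModule (fun x => u x * v x)).
  - intros x _. apply is_derive_Rmult; auto.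
  - intros x _. apply (continuous_plus (fun x => u' x * v x) (fun x => u x * v' x)).
    + apply (continuous_mult u' v); auto.
    + apply (continuous_mult u v'); auto.
Qed.

(* Two integrations by parts; the boundary terms cancel by periodicity of F' and because
   sin (k x) vanishes at x = -PI, PI. *)
Lemma RInt_cos_derive2 (F F1 F2 : R -> R) (k : nat) :
  (forall x, is_derive F x (F1 x)) -> (forall x, is_derive F1 x (F2 x)) -> (forall x, continuous F2 x) ->
  F1 PI = F1 (- PI) ->
  RInt (fun x => F2 x * cos (INR k * x)) (- PI) PI =
    - (INR k * INR k) * RInt (fun x => F x * cos (INR k * x)) (- PI) PI.
Proof.
  intros HF HF1 HF2 Hper. set (r := INR k).
  assert (CF1 : forall x, continuous F1 x) by (intros; apply (ex_derive_continuous F1); eexists; apply HF1).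
  assert (CF : forall x, continuous F x) by (intros; apply (ex_derive_continuous F); eexists; apply HF).
  assert (Dc : forall x, is_derive (fun x => cos (r * x)) x (- r * sin (r * x))).
  { intros x. auto_derive; auto. ring. }
  assert (Ds : forall x, is_derive (fun x => sin (r * x)) x (r * cos (r * x))).
  { intros x. auto_derive; auto. ring. }
  assert (Cs : forall x, continuous (fun x => - r * sin (r * x)) x).
  { intros x. apply (ex_derive_continuous (fun x => - r * sin (r * x))). auto_derive; auto. }
  assert (Cc : forall x, continuous (fun x => r * cos (r * x)) x).
  { intros x. apply (ex_derive_continuous (fun x => r * cos (r * x))). auto_derive; auto. }
  assert (Hs : sin (r * PI) = 0) by apply sin_nat_mul_PI.
  assert (Hs' : sin (r * - PI) = 0).
  { rewrite Ropp_mult_distr_r_reverse, sin_neg, Hs. ring. }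
  assert (Hc' : cos (r * - PI) = cos (r * PI)) by (rewrite Ropp_mult_distr_r_reverse; apply cos_neg).
  assert (G1 := is_RInt_derive_mult F1 F2 _ _ (- PI) PI HF1 Dc HF2 Cs).
  assert (G2 := is_RInt_derive_mult F F1 _ _ (- PI) PI HF Ds CF1 Cc).
  simpl in G1, G2. rewrite Hc', Hper, Rminus_eq_0 in G1. rewrite Hs, Hs', !Rmult_0_r, Rminus_eq_0 in G2.
  set (I2 := RInt (fun x => F2 x * cos (r * x)) (- PI) PI).
  set (I1 := RInt (fun x => F1 x * sin (r * x)) (- PI) PI).
  set (I0 := RInt (fun x => F x * cos (r * x)) (- PI) PI).
  assert (J2 : is_RInt (fun x => F2 x * cos (r * x)) (- PI) PI I2).
  { apply RInt_correct_R, ex_RInt_mul_continuous; auto. intros; apply continuous_cos_mul. }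
  assert (J1 : is_RInt (fun x => F1 x * sin (r * x)) (- PI) PI I1).
  { apply RInt_correct_R, ex_RInt_mul_continuous; auto. intros; apply continuous_sin_mul. }
  assert (J0 : is_RInt (fun x => F x * cos (r * x)) (- PI) PI I0).
  { apply RInt_correct_R, ex_RInt_mul_continuous; auto. intros; apply continuous_cos_mul. }
  assert (E1 : 0 = 1 * I2 + - r * I1).
  { apply (is_RInt_eq _ _ _ _ _ G1).
    apply (is_RInt_ext_R (fun x => 1 * (F2 x * cos (r * x)) + - r * (F1 x * sin (r * x)))).
    - intros; ring.
    - apply is_RInt_lin_comb; auto. }
  assert (E2 : 0 = 1 * I1 + r * I0).
  { apply (is_RInt_eq _ _ _ _ _ G2).
    apply (is_RInt_ext_R (fun x => 1 * (F1 x * sin (r * x)) + r * (F x * cos (r * x)))).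
    - intros; ring.
    - apply is_RInt_lin_comb; auto. }
  fold I2 I0. nra.
Qed.

(** * Cosine coefficients of a solution *)

Definition cos_coef (u : R -> R -> R) (k : nat) (p : R) : R :=
  RInt (fun q => u q p * cos (INR k * q)) (- PI) PI.

Lemma continuity_2d_pt_swap f x y : continuity_2d_pt f x y -> continuity_2d_pt (fun u v => f v u) y x.
Proof. intros H eps. destruct (H eps) as [d Hd]. exists d. intros u v Hu Hv. apply Hd; auto. Qed.

Lemma continuity_2d_pt_snd (C : R -> R) x y : continuous C y -> continuity_2d_pt (fun u v => C v) x y.
Proof.
  intros HC. apply (continuity_1d_2d_pt_comp C (fun u v => v)).
  - apply continuity_pt_filterlim; auto.
  - apply continuity_2d_pt_id2.
Qed.

Lemma is_derive_RInt_mul_param (F : R -> R -> R) (C : R -> R) p lo hi : lo < p < hi ->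
  (forall q y, lo < y < hi -> ex_derive (fun z => F q z) y) ->
  (forall q, continuity_2d_pt (Dp F) q p) ->
  (forall y, lo < y < hi -> forall q, continuous (fun x => F x y) q) ->
  (forall q, continuous C q) ->
  is_derive (fun y => RInt (fun q => F q y * C q) (- PI) PI) p
    (RInt (fun q => Dp F q p * C q) (- PI) PI).
Proof.
  intros Hp Hd Hc2 Hc HC.
  assert (Hloc := locally_open_interval lo hi p Hp).
  assert (E : forall u v, Derive (fun z => F v z * C v) u = Dp F v u * C v).
  { intros u v. unfold Dp. rewrite (Derive_ext _ (fun z => C v * F v z)) by (intros; ring).
    rewrite Derive_scal. apply Rmult_comm. }
  rewrite <- (RInt_ext (fun t => Derive (fun u => F t u * C t) p)) by (intros; apply E).
  apply (is_derive_RInt_param (fun y q => F q y * C q)).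
  - apply (filter_imp (fun y => lo < y < hi)); [|exact Hloc].
    intros y Hy t _. destruct (Hd t y Hy) as [l Hl]. exists (l * C t).
    apply (is_derive_ext (fun y => C t * F t y)); [intros; apply Rmult_comm|].
    rewrite Rmult_comm. apply is_derive_scal, Hl.
  - intros t _. apply (continuity_2d_pt_ext (fun u v => Dp F v u * C v)); [intros; symmetry; apply E|].
    apply (continuity_2d_pt_mult (fun u v => Dp F v u) (fun u v => C v)).
    + apply continuity_2d_pt_swap, Hc2.
    + apply continuity_2d_pt_snd, HC.
  - apply (filter_imp (fun y => lo < y < hi)); [|exact Hloc].
    intros y Hy. apply ex_RInt_mul_continuous; auto.
Qed.

Lemma is_derive_cos_coef al u a b k p : 0 < al -> a < p < b ->
  diff_on (open_strip a b) u -> holder al (open_strip a b) (Dp u) ->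
  (forall y, a < y < b -> forall q, continuous (fun x => u x y) q) ->
  is_derive (cos_coef u k) p (cos_coef (Dp u) k p).
Proof.
  intros Hal Hp Hd HDp Hc. unfold cos_coef.
  apply (is_derive_RInt_mul_param u (fun q => cos (INR k * q)) p a b Hp); auto.
  - intros q y Hy. apply (Hd q y Hy).
  - intros q. apply (holder_continuity_2d al a b); auto.
  - intros q. apply continuous_cos_mul.
Qed.

Lemma cos_coef_DqDq (u : R -> R -> R) k p :
  (forall x, ex_derive (fun x => u x p) x) -> (forall x, ex_derive (fun x => Dq u x p) x) ->
  (forall x, continuous (fun x => Dq (Dq u) x p) x) -> (forall x, u (x + 2 * PI) p = u x p) ->
  cos_coef (Dq (Dq u)) k p = - (INR k * INR k) * cos_coef u k p.
Proof.
  intros H1 H2 H3 Hper. unfold cos_coef.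
  apply (RInt_cos_derive2 (fun x => u x p) (fun x => Dq u x p) (fun x => Dq (Dq u) x p)); auto.
  - intros x. apply Derive_correct, H1.
  - intros x. apply Derive_correct, H2.
  - apply Derive_periodic; auto.
Qed.

Lemma cos_coef_ode al phi a b H k : 0 < al < 1 -> C1alpha al a b phi ->
  (forall p, a < p < b -> exists a' b', a <= a' < p /\ p < b' <= b /\ C2alpha al a' b' phi) ->
  (forall p, a <= p <= b -> forall q, continuous (fun x => phi x p) q) ->
  (forall q p, a <= p <= b -> phi (q + 2 * PI) p = phi q p) ->
  (forall q p, a < p < b -> Dp (Dp phi) q p + H ^ 2 * Dq (Dq phi) q p = 0) ->
  forall p, a < p < b -> is_derive (cos_coef phi k) p (cos_coef (Dp phi) k p) /\
    is_derive (cos_coef (Dp phi) k) p ((H * INR k) * (H * INR k) * cos_coef phi k p).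
Proof.
  intros Hal [Hh1 [Hd1 [HhDq HhDp]]] HC2 Hc Hper Heq p Hp. split.
  - apply (is_derive_cos_coef al phi a b); auto; try lra.
    intros y Hy. apply Hc. lra.
  - destruct (HC2 p Hp) as [a' [b' [Ha' [Hb' [_ [HdDq [HdDp [HhDqDq [_ [_ HhDpDp]]]]]]]]]].
    assert (Hp' : a' < p < b') by lra.
    assert (HcDqDq : forall x, continuous (fun x => Dq (Dq phi) x p) x).
    { apply (holder_continuous_q al (open_strip a' b')); [lra | auto |].
      intros; unfold open_strip; lra. }
    replace ((H * INR k) * (H * INR k) * cos_coef phi k p) with (cos_coef (Dp (Dp phi)) k p).
    + apply (is_derive_cos_coef al (Dp phi) a' b'); auto; try lra.
      intros y Hy q. apply (holder_continuous_q al (open_strip a b)); [lra | auto |].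
      intros; unfold open_strip; lra.
    + unfold cos_coef at 1.
      rewrite (RInt_ext _ (fun q => (- H ^ 2) * (Dq (Dq phi) q p * cos (INR k * q)))).
      * rewrite RInt_scal_R by (apply ex_RInt_mul_continuous; auto; apply continuous_cos_mul).
        fold (cos_coef (Dq (Dq phi)) k p).
        rewrite (cos_coef_DqDq phi k p); [ring | | | auto |].
        -- intros x. apply (Hd1 x p Hp).
        -- intros x. apply (HdDq x p Hp').
        -- intros x. apply Hper. lra.
      * intros x _. assert (Ex := Heq x p Hp).
        replace (Dp (Dp phi) x p) with (- H ^ 2 * Dq (Dq phi) x p) by lra.
        change (- H ^ 2 * Dq (Dq phi) x p * cos (INR k * x) =
          - H ^ 2 * (Dq (Dq phi) x p * cos (INR k * x))). ring.
Qed.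

Lemma cos_coef_holder al phi k lo hi : 0 < al -> holder al (closed_strip lo hi) phi ->
  exists K, holder_on al lo hi K (cos_coef phi k).
Proof.
  intros Hal Hh. destruct (holder_in_p al _ _ Hh) as [C HC].
  assert (Hc : forall y, lo <= y <= hi -> forall x, continuous (fun x => phi x y) x).
  { intros y Hy. apply (holder_continuous_q al (closed_strip lo hi)); auto. }
  exists (2 * PI * Rabs C). intros p p' Hp Hp' Hne. unfold cos_coef.
  assert (Ex : forall y, lo <= y <= hi -> ex_RInt (fun x => phi x y * cos (INR k * x)) (- PI) PI).
  { intros y Hy. apply ex_RInt_mul_continuous; auto. apply continuous_cos_mul. }
  assert (E : is_RInt (fun x => (phi x p - phi x p') * cos (INR k * x)) (- PI) PI
    (RInt (fun x => phi x p * cos (INR k * x)) (- PI) PI -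
     RInt (fun x => phi x p' * cos (INR k * x)) (- PI) PI)).
  { apply (is_RInt_ext_R (fun x => 1 * (phi x p * cos (INR k * x)) + -1 * (phi x p' * cos (INR k * x)))).
    - intros; ring.
    - replace (_ - _) with (1 * RInt (fun x => phi x p * cos (INR k * x)) (- PI) PI +
        -1 * RInt (fun x => phi x p' * cos (INR k * x)) (- PI) PI) by ring.
      apply is_RInt_lin_comb; apply RInt_correct_R, Ex; auto. }
  rewrite <- (is_RInt_unique _ _ _ _ E).
  replace (2 * PI * Rabs C * Rpower (Rabs (p - p')) al)
    with (2 * PI * (Rabs C * Rpower (Rabs (p - p')) al)) by ring.
  apply abs_RInt_period_le; [eexists; exact E|].
  intros t. rewrite Rabs_mult. assert (H1 : Rabs (cos (INR k * t)) <= 1) by apply Rabs_le, COS_bound.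
  assert (H2 := HC t p p' Hp Hp' Hne). assert (H3 := Rpower_pos (Rabs (p - p')) al).
  assert (C * Rpower (Rabs (p - p')) al <= Rabs C * Rpower (Rabs (p - p')) al).
  { apply Rmult_le_compat_r; [lra | apply Rle_abs]. }
  assert (H5 := Rabs_pos (phi t p - phi t p')). assert (H7 := Rabs_pos (cos (INR k * t))). nra.
Qed.

Lemma cos_coef_zero u k p : (forall q, u q p = 0) -> cos_coef u k p = 0.
Proof.
  intros H. unfold cos_coef. rewrite (RInt_ext _ (fun _ => 0)).
  - rewrite RInt_const. apply Rmult_0_r.
  - intros x _. rewrite H. apply Rmult_0_l.
Qed.

Lemma cos_coef_const (u : R -> R -> R) k p c : (1 <= k)%nat -> (forall q, u q p = c) -> cos_coef u k p = 0.
Proof.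
  intros Hk H. unfold cos_coef. rewrite (RInt_ext _ (fun q => c * cos (INR k * q))).
  - rewrite RInt_scal_R by (apply ex_RInt_continuous_R, continuous_cos_mul).
    rewrite (is_RInt_unique _ _ _ _ (is_RInt_cos_nat k Hk)). apply Rmult_0_r.
  - intros x _. rewrite H. reflexivity.
Qed.

Lemma cos_coef0_top (phi : R -> R -> R) p1 : (forall q, phi q 0 - dmean p1 phi = 0) ->
  cos_coef phi 0 0 = cos_coef phi 0 p1.
Proof.
  intros H. assert (HP := PI_RGT_0). unfold cos_coef.
  assert (Hcos0 : forall x, cos (INR 0 * x) = 1) by (intros; simpl; rewrite Rmult_0_l; apply cos_0).
  rewrite (RInt_ext _ (fun _ => dmean p1 phi)).
  - rewrite RInt_const. unfold dmean.
    rewrite (RInt_ext (fun q => phi q p1 * cos (INR 0 * q)) (fun q => phi q p1)).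
    + change ((PI - - PI) * (/ (2 * PI) * RInt (fun q => phi q p1) (- PI) PI) =
        RInt (fun q => phi q p1) (- PI) PI). field. lra.
    + intros x _. rewrite Hcos0. apply Rmult_1_r.
  - intros x _. rewrite Hcos0, Rmult_1_r. specialize (H x). lra.
Qed.

Lemma one_sided_holder_estimate (f : R -> R) x0 L1 L2 A B C1 C2 al p p' :
  0 < al -> 0 <= A -> 0 <= B -> x0 < p -> p' < x0 ->
  filterlim f (at_right x0) (locally L1) -> filterlim f (at_left x0) (locally L2) ->
  (forall z, x0 < z < p -> Rabs (f p - f z) <= C1 * Rpower (Rabs (p - z)) al) ->
  (forall z, p' < z < x0 -> Rabs (f p' - f z) <= C2 * Rpower (Rabs (p' - z)) al) ->
  Rabs (A * f p - B * f p' - (A * L1 - B * L2))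
    <= (A * Rabs C1 + B * Rabs C2) * (Rpower (p - x0) al + Rpower (x0 - p') al).
Proof.
  intros Hal HA HB Hp Hp' Hr Hl H1 H2.
  assert (B1 : Rabs (f p - L1) <= Rabs C1 * Rpower (Rabs (p - x0)) al).
  { apply (holder_one_sided_limit f x0 L1 C1 al 1 Hal (or_introl eq_refl)); [| lra |].
    - apply (filterlim_filter_le_1 (F := at_right x0)); [|exact Hr].
      apply filter_le_within_sub. intros u Hu. lra.
    - intros z Hz. apply H1. lra. }
  assert (B2 : Rabs (f p' - L2) <= Rabs C2 * Rpower (Rabs (p' - x0)) al).
  { apply (holder_one_sided_limit f x0 L2 C2 al (-1) Hal (or_intror eq_refl)); [| lra |].
    - apply (filterlim_filter_le_1 (F := at_left x0)); [|exact Hl].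
      apply filter_le_within_sub. intros u Hu. lra.
    - intros z Hz. apply H2. lra. }
  rewrite (Rabs_right (p - x0)) in B1 by lra. rewrite (Rabs_left (p' - x0)), Ropp_minus_distr in B2 by lra.
  replace (A * f p - B * f p' - (A * L1 - B * L2)) with (A * (f p - L1) + - (B * (f p' - L2))) by ring.
  apply Rle_trans with (1 := Rabs_triang _ _). rewrite Rabs_Ropp, !Rabs_mult, (Rabs_right A), (Rabs_right B) by lra.
  assert (R1 := Rpower_pos (p - x0) al). assert (R2 := Rpower_pos (x0 - p') al).
  assert (A1 := Rabs_pos C1). assert (A2 := Rabs_pos C2).
  assert (A * Rabs (f p - L1) <= A * (Rabs C1 * Rpower (p - x0) al)) by (apply Rmult_le_compat_l; lra).
  assert (B * Rabs (f p' - L2) <= B * (Rabs C2 * Rpower (x0 - p') al)) by (apply Rmult_le_compat_l; lra).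
  assert (0 <= A * Rabs C1 * Rpower (x0 - p') al) by (repeat apply Rmult_le_pos; lra).
  assert (0 <= B * Rabs C2 * Rpower (p - x0) al) by (repeat apply Rmult_le_pos; lra).
  nra.
Qed.

Lemma cos_coef_transmission al phi g jrho Gam lam p0 p1 k :
  0 < al -> p0 < p1 -> p1 < 0 -> 0 < Gam -> 0 < lam ->
  (forall q, exists L1 L2,
      filterlim (fun p => Dp phi q p) (at_right p1) (locally L1) /\
      filterlim (fun p => Dp phi q p) (at_left p1) (locally L2) /\
      2 * (/ (/ Gam) ^ 3 * L1 - / (/ lam) ^ 3 * L2) - 2 * g * jrho * phi q p1 = 0) ->
  holder al (open_strip p1 0) (Dp phi) -> holder al (open_strip p0 p1) (Dp phi) ->
  (forall q, continuous (fun x => phi x p1) q) ->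
  exists K, forall p p', p1 < p < 0 -> p0 < p' < p1 ->
    Rabs (Gam ^ 3 * cos_coef (Dp phi) k p - lam ^ 3 * cos_coef (Dp phi) k p' - g * jrho * cos_coef phi k p1)
      <= K * (Rpower (p - p1) al + Rpower (p1 - p') al).
Proof.
  intros Hal Hp01 Hp1 HG Hl Hj HhR HhL Hc1.
  destruct (holder_in_p al _ _ HhR) as [C1 HC1]. destruct (holder_in_p al _ _ HhL) as [C2 HC2].
  assert (HG3 : 0 < Gam ^ 3) by (apply pow_lt; lra). assert (Hl3 : 0 < lam ^ 3) by (apply pow_lt; lra).
  set (K0 := Gam ^ 3 * Rabs C1 + lam ^ 3 * Rabs C2).
  exists (2 * PI * K0). intros p p' Hp Hp'.
  set (F := fun q => Gam ^ 3 * Dp phi q p - lam ^ 3 * Dp phi q p' - g * jrho * phi q p1).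
  assert (ExR : ex_RInt (fun q => Dp phi q p * cos (INR k * q)) (- PI) PI).
  { apply ex_RInt_mul_continuous; [|apply continuous_cos_mul].
    apply (holder_continuous_q al (open_strip p1 0)); auto. }
  assert (ExL : ex_RInt (fun q => Dp phi q p' * cos (INR k * q)) (- PI) PI).
  { apply ex_RInt_mul_continuous; [|apply continuous_cos_mul].
    apply (holder_continuous_q al (open_strip p0 p1)); auto. }
  assert (Ex1 : ex_RInt (fun q => phi q p1 * cos (INR k * q)) (- PI) PI).
  { apply ex_RInt_mul_continuous; auto. apply continuous_cos_mul. }
  assert (J : is_RInt (fun q => F q * cos (INR k * q)) (- PI) PI
    (Gam ^ 3 * cos_coef (Dp phi) k p - lam ^ 3 * cos_coef (Dp phi) k p' - g * jrho * cos_coef phi k p1)).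
  { apply (is_RInt_ext_R (fun q => 1 * (Gam ^ 3 * (Dp phi q p * cos (INR k * q)) +
      - lam ^ 3 * (Dp phi q p' * cos (INR k * q))) + - (g * jrho) * (phi q p1 * cos (INR k * q)))).
    - intros q _. unfold F. ring.
    - replace (_ - _ - _) with (1 * (Gam ^ 3 * cos_coef (Dp phi) k p + - lam ^ 3 * cos_coef (Dp phi) k p') +
        - (g * jrho) * cos_coef phi k p1) by ring.
      apply is_RInt_lin_comb; [apply is_RInt_lin_comb|]; apply RInt_correct_R; auto. }
  rewrite <- (is_RInt_unique _ _ _ _ J), Rmult_assoc.
  apply abs_RInt_period_le; [eexists; exact J|].
  intros q. destruct (Hj q) as [L1 [L2 [Hr [Hle Heq]]]].
  assert (E : g * jrho * phi q p1 = Gam ^ 3 * L1 - lam ^ 3 * L2).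
  { replace (/ (/ Gam) ^ 3) with (Gam ^ 3) in Heq by (field; lra).
    replace (/ (/ lam) ^ 3) with (lam ^ 3) in Heq by (field; lra). lra. }
  unfold F. rewrite E, Rabs_mult.
  assert (Hc := Rabs_pos (cos (INR k * q))). assert (Hc' : Rabs (cos (INR k * q)) <= 1) by apply Rabs_le, COS_bound.
  assert (HX := one_sided_holder_estimate (fun y => Dp phi q y) p1 L1 L2 (Gam ^ 3) (lam ^ 3) C1 C2 al p p'
    Hal ltac:(lra) ltac:(lra) ltac:(lra) ltac:(lra) Hr Hle
    (fun z Hz => HC1 q p z ltac:(unfold open_strip; lra) ltac:(unfold open_strip; lra) ltac:(lra))
    (fun z Hz => HC2 q p' z ltac:(unfold open_strip; lra) ltac:(unfold open_strip; lra) ltac:(lra))).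
  fold K0 in HX. assert (H0 := Rabs_pos (Gam ^ 3 * Dp phi q p - lam ^ 3 * Dp phi q p' - (Gam ^ 3 * L1 - lam ^ 3 * L2))).
  nra.
Qed.

(** * The Fourier modes *)

Definition profile (Gam lam p0 p1 p : R) : R :=
  if Rle_dec p1 p then sinh (p / Gam) / sinh (p1 / Gam)
  else sinh ((p - p0) / lam) / sinh ((p1 - p0) / lam).

Lemma holder_on_sub al a b a' b' K c : a <= a' -> b' <= b ->
  holder_on al a b K c -> holder_on al a' b' K c.
Proof. intros Ha Hb H p p' Hp Hp' Hne. apply H; auto; lra. Qed.

Lemma continuous_hyperbolic_affine A B m k0 x :
  continuous (fun p => A * cosh (m * p + k0) + B * sinh (m * p + k0)) x.
Proof.
  apply (ex_derive_continuous (fun p => A * cosh (m * p + k0) + B * sinh (m * p + k0))).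
  eexists. apply (is_derive_plus (fun p => A * cosh (m * p + k0)) (fun p => B * sinh (m * p + k0)));
    apply is_derive_scal; [apply is_derive_cosh_affine | apply is_derive_sinh_affine].
Qed.

Lemma continuous_affine A B x : continuous (fun p => A + B * p) x.
Proof. apply (ex_derive_continuous (fun p => A + B * p)). auto_derive; auto. Qed.

Lemma dispersion_mode0_neg Gam lam p0 p1 gj : p0 < p1 -> p1 < 0 -> 0 < Gam -> 0 < lam ->
  gj = Gam ^ 2 * coth (p1 / Gam) - lam ^ 2 * coth ((p1 - p0) / lam) ->
  lam ^ 3 + gj * (p1 - p0) < 0.
Proof.
  intros Hp01 Hp1 HG Hl Hgj. subst gj. unfold coth.
  set (v := (p1 - p0) / lam). assert (Hv : 0 < v) by (unfold v; apply Rdiv_lt_0_compat; lra).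
  assert (Hh : p1 - p0 = lam * v) by (unfold v; field; lra).
  assert (S1 : sinh (p1 / Gam) < 0) by (apply sinh_lt_0, Rdiv_neg_pos; lra).
  assert (C1 := cosh_pos (p1 / Gam)). assert (Sv := sinh_pos v Hv).
  assert (T1 : cosh (p1 / Gam) / sinh (p1 / Gam) < 0).
  { apply Rmult_pos_neg; [lra | apply Rinv_lt_0_compat; auto]. }
  assert (T2 : 1 <= v * (cosh v / sinh v)).
  { apply Rmult_le_reg_r with (sinh v); auto. rewrite Rmult_1_l.
    replace (v * (cosh v / sinh v) * sinh v) with (v * cosh v) by (field; lra).
    apply sinh_le_mul_cosh; auto. }
  rewrite Hh.
  replace (lam ^ 3 + (Gam ^ 2 * (cosh (p1 / Gam) / sinh (p1 / Gam)) - lam ^ 2 * (cosh v / sinh v)) * (lam * v))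
    with (lam ^ 3 * (1 - v * (cosh v / sinh v)) + (Gam ^ 2 * lam * v) * (cosh (p1 / Gam) / sinh (p1 / Gam)))
    by ring.
  assert (0 < lam ^ 3) by (apply pow_lt; lra).
  assert (0 < Gam ^ 2 * lam * v) by (apply Rmult_lt_0_compat; [apply Rmult_lt_0_compat; [apply pow_lt|]|]; lra).
  assert (lam ^ 3 * (1 - v * (cosh v / sinh v)) <= 0) by nra.
  assert ((Gam ^ 2 * lam * v) * (cosh (p1 / Gam) / sinh (p1 / Gam)) < 0) by (apply Rmult_pos_neg; lra).
  lra.
Qed.

(* The k-th mode would need Gam^2 (k coth (k u) - coth u) + lam^2 (k coth (k v) - coth v) = 0,
   but both brackets are positive for k >= 2. *)
Lemma higher_mode_trivial Gam lam u v kk B1 B2 c1 gj : 0 < Gam -> 0 < lam -> 0 < u -> 0 < v -> 0 < kk ->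
  sinh (kk * u) * cosh u < kk * cosh (kk * u) * sinh u ->
  sinh (kk * v) * cosh v < kk * cosh (kk * v) * sinh v ->
  c1 = - B1 * sinh (kk * u) -> c1 = B2 * sinh (kk * v) ->
  gj = - Gam ^ 2 * (cosh u / sinh u) - lam ^ 2 * (cosh v / sinh v) ->
  Gam ^ 2 * kk * B1 * cosh (kk * u) - lam ^ 2 * kk * B2 * cosh (kk * v) = gj * c1 ->
  c1 = 0.
Proof.
  intros HG Hl Hu Hv Hk Iu Iv HB1 HB2 Hgj HJ.
  assert (su := sinh_pos u Hu). assert (sv := sinh_pos v Hv).
  assert (sku := sinh_pos (kk * u) ltac:(nra)). assert (skv := sinh_pos (kk * v) ltac:(nra)).
  assert (E1 : B1 = - c1 / sinh (kk * u)) by (rewrite HB1; field; lra).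
  assert (E2 : B2 = c1 / sinh (kk * v)) by (rewrite HB2; field; lra).
  rewrite E1, E2, Hgj in HJ.
  assert (Pu : 0 < kk * cosh (kk * u) / sinh (kk * u) - cosh u / sinh u).
  { replace (kk * cosh (kk * u) / sinh (kk * u) - cosh u / sinh u) with
      ((kk * cosh (kk * u) * sinh u - sinh (kk * u) * cosh u) / (sinh (kk * u) * sinh u)) by (field; lra).
    apply Rdiv_lt_0_compat; nra. }
  assert (Pv : 0 < kk * cosh (kk * v) / sinh (kk * v) - cosh v / sinh v).
  { replace (kk * cosh (kk * v) / sinh (kk * v) - cosh v / sinh v) with
      ((kk * cosh (kk * v) * sinh v - sinh (kk * v) * cosh v) / (sinh (kk * v) * sinh v)) by (field; lra).
    apply Rdiv_lt_0_compat; nra. }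
  set (T := Gam ^ 2 * (kk * cosh (kk * u) / sinh (kk * u) - cosh u / sinh u) +
            lam ^ 2 * (kk * cosh (kk * v) / sinh (kk * v) - cosh v / sinh v)).
  assert (HT : 0 < T).
  { assert (0 < Gam ^ 2) by (apply pow_lt; lra). assert (0 < lam ^ 2) by (apply pow_lt; lra).
    unfold T. nra. }
  assert (Z : c1 * T = 0).
  { transitivity ((- Gam ^ 2 * (cosh u / sinh u) - lam ^ 2 * (cosh v / sinh v)) * c1 -
      (Gam ^ 2 * kk * (- c1 / sinh (kk * u)) * cosh (kk * u) - lam ^ 2 * kk * (c1 / sinh (kk * v)) * cosh (kk * v))).
    - unfold T. field. repeat split; lra.
    - rewrite HJ. ring. }
  apply Rmult_integral in Z. destruct Z; [auto | lra].
Qed.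

Section Modes.
Variables (c d : R -> R) (k : nat) (al Gam lam p0 p1 gj Kh Kj : R).
Hypothesis al_pos : 0 < al.
Hypothesis p0_lt_p1 : p0 < p1.
Hypothesis p1_neg : p1 < 0.
Hypothesis Gam_pos : 0 < Gam.
Hypothesis lam_pos : 0 < lam.
Hypothesis dispersion : gj = Gam ^ 2 * coth (p1 / Gam) - lam ^ 2 * coth ((p1 - p0) / lam).
Hypothesis ode_upper : forall p, p1 < p < 0 ->
  is_derive c p (d p) /\ is_derive d p ((/ Gam * INR k) * (/ Gam * INR k) * c p).
Hypothesis ode_lower : forall p, p0 < p < p1 ->
  is_derive c p (d p) /\ is_derive d p ((/ lam * INR k) * (/ lam * INR k) * c p).
Hypothesis c_holder : holder_on al p0 0 Kh c.
Hypothesis c_bottom : c p0 = 0.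
Hypothesis transmission : forall p p', p1 < p < 0 -> p0 < p' < p1 ->
  Rabs (Gam ^ 3 * d p - lam ^ 3 * d p' - gj * c p1) <= Kj * (Rpower (p - p1) al + Rpower (p1 - p') al).

Lemma mode0_zero : k = 0%nat -> c 0 = c p1 -> forall p, p0 <= p <= 0 -> c p = 0.
Proof.
  intros Hk Htop.
  assert (D1 : forall p, p1 < p < 0 -> is_derive d p 0).
  { intros p Hp. destruct (ode_upper p Hp) as [_ H]. rewrite Hk in H. simpl INR in H.
    rewrite Rmult_0_r, !Rmult_0_l in H. exact H. }
  assert (D2 : forall p, p0 < p < p1 -> is_derive d p 0).
  { intros p Hp. destruct (ode_lower p Hp) as [_ H]. rewrite Hk in H. simpl INR in H.
    rewrite Rmult_0_r, !Rmult_0_l in H. exact H. }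
  destruct (ode_affine c d p1 0 p1_neg (fun p Hp => proj1 (ode_upper p Hp)) D1) as [A1 [B1 HE1]].
  destruct (ode_affine c d p0 p1 p0_lt_p1 (fun p Hp => proj1 (ode_lower p Hp)) D2) as [A2 [B2 HE2]].
  assert (X1 : forall p, p1 <= p <= 0 -> c p = A1 + B1 * p).
  { apply (holder_on_eq_closed c _ p1 0 al Kh); auto; try lra.
    - apply (holder_on_sub al p0 0); auto; lra.
    - intros p Hp; apply HE1; auto.
    - intros; apply continuous_affine. }
  assert (X2 : forall p, p0 <= p <= p1 -> c p = A2 + B2 * p).
  { apply (holder_on_eq_closed c _ p0 p1 al Kh); auto; try lra.
    - apply (holder_on_sub al p0 0); auto; lra.
    - intros p Hp; apply HE2; auto.
    - intros; apply continuous_affine. }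
  assert (E0 := X1 0 ltac:(lra)). assert (E1 := X1 p1 ltac:(lra)).
  assert (E2 := X2 p0 ltac:(lra)). assert (E3 := X2 p1 ltac:(lra)).
  assert (HB1 : B1 = 0).
  { assert (B1 * p1 = 0) by lra. apply Rmult_integral in H. destruct H; [auto | lra]. }
  assert (J := transmission_limit d (fun _ => B1) (fun _ => B2) (c p1) Gam lam gj p0 p1 al Kj
    al_pos p0_lt_p1 p1_neg Gam_pos lam_pos (fun p Hp => proj2 (HE1 p Hp)) (fun p Hp => proj2 (HE2 p Hp))
    (continuous_const _ _) (continuous_const _ _) transmission).
  assert (Hc1 : c p1 = B2 * (p1 - p0)) by lra.
  assert (HT := dispersion_mode0_neg Gam lam p0 p1 gj p0_lt_p1 p1_neg Gam_pos lam_pos dispersion).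
  assert (HB2 : B2 = 0).
  { rewrite HB1, Hc1 in J. assert (B2 * (lam ^ 3 + gj * (p1 - p0)) = 0) by lra.
    apply Rmult_integral in H. destruct H; [auto | lra]. }
  intros p Hp. destruct (Rle_dec p1 p).
  - rewrite X1 by lra. subst. lra.
  - rewrite X2 by lra. subst. lra.
Qed.

Lemma mode_sinh_form : (1 <= k)%nat -> c 0 = 0 ->
  exists B1 B2,
    (forall p, p1 <= p <= 0 -> c p = B1 * sinh (INR k * (p / Gam))) /\
    (forall p, p0 <= p <= p1 -> c p = B2 * sinh (INR k * ((p - p0) / lam))) /\
    Gam ^ 2 * INR k * B1 * cosh (INR k * (p1 / Gam))
      - lam ^ 2 * INR k * B2 * cosh (INR k * ((p1 - p0) / lam)) = gj * c p1.
Proof.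
  intros Hk Htop. assert (Hkk : 1 <= INR k) by (apply (le_INR 1); auto).
  set (m1 := / Gam * INR k). set (m2 := / lam * INR k).
  assert (Hm1 : 0 < m1) by (unfold m1; apply Rmult_lt_0_compat; [apply Rinv_0_lt_compat|]; lra).
  assert (Hm2 : 0 < m2) by (unfold m2; apply Rmult_lt_0_compat; [apply Rinv_0_lt_compat|]; lra).
  assert (E1 : forall p, m1 * p + 0 = INR k * (p / Gam)) by (intros; unfold m1; field; lra).
  assert (E2 : forall p, m2 * p + - (m2 * p0) = INR k * ((p - p0) / lam)) by (intros; unfold m2; field; lra).
  destruct (ode_hyperbolic c d m1 0 p1 0 Hm1 p1_neg (fun p Hp => proj1 (ode_upper p Hp))
    (fun p Hp => proj2 (ode_upper p Hp))) as [A1 [B1 HE1]].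
  destruct (ode_hyperbolic c d m2 (- (m2 * p0)) p0 p1 Hm2 p0_lt_p1 (fun p Hp => proj1 (ode_lower p Hp))
    (fun p Hp => proj2 (ode_lower p Hp))) as [A2 [B2 HE2]].
  assert (X1 : forall p, p1 <= p <= 0 -> c p = A1 * cosh (m1 * p + 0) + B1 * sinh (m1 * p + 0)).
  { apply (holder_on_eq_closed c _ p1 0 al Kh); auto; try lra.
    - apply (holder_on_sub al p0 0); auto; lra.
    - intros p Hp; apply HE1; auto.
    - intros; apply continuous_hyperbolic_affine. }
  assert (X2 : forall p, p0 <= p <= p1 ->
    c p = A2 * cosh (m2 * p + - (m2 * p0)) + B2 * sinh (m2 * p + - (m2 * p0))).
  { apply (holder_on_eq_closed c _ p0 p1 al Kh); auto; try lra.
    - apply (holder_on_sub al p0 0); auto; lra.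
    - intros p Hp; apply HE2; auto.
    - intros; apply continuous_hyperbolic_affine. }
  assert (HA1 : A1 = 0).
  { assert (E := X1 0 ltac:(lra)). rewrite Htop, Rmult_0_r, Rplus_0_r, cosh_0, sinh_0 in E. lra. }
  assert (HA2 : A2 = 0).
  { assert (E := X2 p0 ltac:(lra)). rewrite c_bottom, Rplus_opp_r, cosh_0, sinh_0 in E. lra. }
  assert (J := transmission_limit d
    (fun p => (m1 * B1) * cosh (m1 * p + 0) + (m1 * A1) * sinh (m1 * p + 0))
    (fun p => (m2 * B2) * cosh (m2 * p + - (m2 * p0)) + (m2 * A2) * sinh (m2 * p + - (m2 * p0)))
    (c p1) Gam lam gj p0 p1 al Kj al_pos p0_lt_p1 p1_neg Gam_pos lam_pos).
  rewrite HA1, HA2 in J.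
  exists B1, B2. split; [|split].
  - intros p Hp. rewrite X1, HA1, E1 by lra. ring.
  - intros p Hp. rewrite X2, HA2, E2 by lra. ring.
  - rewrite <- E1, <- E2. rewrite <- J.
    + unfold m1, m2. field. lra.
    + intros p Hp. rewrite (proj2 (HE1 p Hp)), HA1. ring.
    + intros p Hp. rewrite (proj2 (HE2 p Hp)), HA2. ring.
    + apply continuous_hyperbolic_affine.
    + apply continuous_hyperbolic_affine.
    + exact transmission.
Qed.

Lemma mode1_profile : k = 1%nat -> c 0 = 0 ->
  forall p, p0 <= p <= 0 -> c p = c p1 * profile Gam lam p0 p1 p.
Proof.
  intros Hk Htop. destruct (mode_sinh_form ltac:(lia) Htop) as [B1 [B2 [X1 [X2 _]]]].
  rewrite Hk in X1, X2. simpl INR in X1, X2.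
  assert (S1 : sinh (p1 / Gam) < 0) by (apply sinh_lt_0, Rdiv_neg_pos; lra).
  assert (S2 : 0 < sinh ((p1 - p0) / lam)) by (apply sinh_pos, Rdiv_lt_0_compat; lra).
  intros p Hp. unfold profile. destruct (Rle_dec p1 p).
  - rewrite (X1 p), (X1 p1), !Rmult_1_l by lra. field. lra.
  - rewrite (X2 p), (X2 p1), !Rmult_1_l by lra. field. lra.
Qed.

Lemma mode_ge2_zero : (2 <= k)%nat -> c 0 = 0 -> forall p, p0 <= p <= 0 -> c p = 0.
Proof.
  intros Hk Htop. destruct (mode_sinh_form ltac:(lia) Htop) as [B1 [B2 [X1 [X2 J]]]].
  set (u := - p1 / Gam). set (v := (p1 - p0) / lam).
  assert (Hu : 0 < u) by (unfold u; apply Rdiv_lt_0_compat; lra).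
  assert (Hv : 0 < v) by (unfold v; apply Rdiv_lt_0_compat; lra).
  assert (Eu : p1 / Gam = - u) by (unfold u; field; lra).
  assert (Hkk : 2 <= INR k) by (apply (le_INR 2); auto).
  assert (Hc1 : c p1 = 0).
  { apply (higher_mode_trivial Gam lam u v (INR k) B1 B2 (c p1) gj); auto; try lra.
    - apply sinh_mul_cosh_lt; auto.
    - apply sinh_mul_cosh_lt; auto.
    - rewrite X1, Eu, Ropp_mult_distr_r_reverse, sinh_neg by lra. ring.
    - apply X2. lra.
    - rewrite dispersion. unfold coth. rewrite Eu, sinh_neg, cosh_neg. fold v.
      field. split; apply Rgt_not_eq, sinh_pos; auto.
    - rewrite <- J, Eu, Ropp_mult_distr_r_reverse, cosh_neg. reflexivity. }
  assert (SU := sinh_pos (INR k * u) ltac:(nra)). assert (SV := sinh_pos (INR k * v) ltac:(nra)).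
  assert (HB1 : B1 = 0).
  { rewrite X1, Eu, Ropp_mult_distr_r_reverse, sinh_neg in Hc1 by lra. nra. }
  assert (HB2 : B2 = 0) by (rewrite X2 in Hc1 by lra; fold v in Hc1; nra).
  intros p Hp. destruct (Rle_dec p1 p).
  - rewrite X1, HB1 by lra. ring.
  - rewrite X2, HB2 by lra. ring.
Qed.

End Modes.

(** * The kernel element *)

Section SeparableBranch.
Variables (A : R -> R) (K m c lo hi : R).
Hypothesis A_branch : forall y, lo < y < hi -> A y = K * sinh (m * y + c).
Let phi := fun q p => cos q * A p.
Let A' := fun p => K * (m * cosh (m * p + c)).

Lemma is_derive_branch p : lo < p < hi -> is_derive A p (A' p).
Proof.
  intros Hp. apply (is_derive_ext_loc (fun y => K * sinh (m * y + c))).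
  - apply (filter_imp (fun y => lo < y < hi)); [|apply locally_open_interval; auto].
    intros y Hy. rewrite A_branch; auto.
  - apply is_derive_scal, is_derive_sinh_affine.
Qed.

Lemma Dq_sep q p : Dq phi q p = - sin q * A p.
Proof. unfold Dq, phi. apply is_derive_unique. auto_derive; auto. ring. Qed.

Lemma Dp_sep q p : lo < p < hi -> Dp phi q p = cos q * A' p.
Proof. intros Hp. unfold Dp, phi. apply is_derive_unique, is_derive_scal, is_derive_branch; auto. Qed.

Lemma is_derive_Dp_sep q p : lo < p < hi -> is_derive (fun y => Dp phi q y) p (cos q * (m * m * A p)).
Proof.
  intros Hp. apply (is_derive_ext_loc (fun y => cos q * A' y)).
  - apply (filter_imp (fun y => lo < y < hi)); [|apply locally_open_interval; auto].
    intros y Hy. symmetry. apply Dp_sep; auto.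
  - replace (cos q * (m * m * A p)) with (cos q * (K * (m * (m * sinh (m * p + c)))))
      by (rewrite A_branch by auto; ring).
    unfold A'. apply is_derive_scal, is_derive_scal, is_derive_scal, is_derive_cosh_affine.
Qed.

Lemma DqDq_sep q p : Dq (Dq phi) q p = - cos q * A p.
Proof.
  unfold Dq at 1. rewrite (Derive_ext _ (fun x => - sin x * A p)) by (intros; apply Dq_sep).
  apply is_derive_unique. auto_derive; auto. ring.
Qed.

Lemma DpDq_sep q p : lo < p < hi -> Dp (Dq phi) q p = - sin q * A' p.
Proof.
  intros Hp. unfold Dp at 1. rewrite (Derive_ext _ (fun y => - sin q * A y)) by (intros; apply Dq_sep).
  apply is_derive_unique, is_derive_scal, is_derive_branch; auto.
Qed.

Lemma DqDp_sep q p : lo < p < hi -> Dq (Dp phi) q p = - sin q * A' p.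
Proof.
  intros Hp. unfold Dq at 1.
  rewrite (Derive_ext _ (fun x => cos x * A' p)) by (intros; apply Dp_sep; auto).
  apply is_derive_unique. auto_derive; auto. ring.
Qed.

Lemma DpDp_sep q p : lo < p < hi -> Dp (Dp phi) q p = cos q * (m * m * A p).
Proof. intros Hp. apply is_derive_unique, is_derive_Dp_sep; auto. Qed.

Lemma sep_C2alpha al lo' hi' : 0 < al < 1 -> lo <= lo' -> hi' <= hi ->
  holder al (closed_strip lo' hi') phi -> C2alpha al lo' hi' phi.
Proof.
  intros Hal Hlo Hhi Hphi.
  assert (Hc : forall x, Rabs (cos x) <= 1) by (intros; apply Rabs_le, COS_bound).
  assert (Hs : forall x, Rabs (sin x) <= 1) by (intros; apply Rabs_le, SIN_bound).
  assert (HA : forall p, lo' < p < hi' -> A p = K * sinh (m * p + c)) by (intros; apply A_branch; lra).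
  assert (HI : forall p, lo' < p < hi' -> lo < p < hi) by (intros; lra).
  split; [split; [|split; [|split]] | split; [|split; [|split; [|split; [|split]]]]].
  - exact Hphi.
  - intros q p Hp. split; [unfold phi; auto_derive; auto|].
    exists (cos q * A' p). apply is_derive_scal, is_derive_branch; auto.
  - apply (holder_open_mul_lipschitz al lo' hi' sin _ (fun p => (- K) * sinh (m * p + c)));
      auto using sin_lipschitz, bounded_lipschitz_sinh_affine.
    intros q p Hp. rewrite Dq_sep, HA by auto. ring.
  - apply (holder_open_mul_lipschitz al lo' hi' cos _ (fun p => (K * m) * cosh (m * p + c)));
      auto using cos_lipschitz, bounded_lipschitz_cosh_affine.
    intros q p Hp. rewrite Dp_sep by auto. unfold A'. ring.
  - intros q p Hp. split.
    + exists (- cos q * A p). apply (is_derive_ext (fun x => - sin x * A p)).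
      * intros; symmetry; apply Dq_sep.
      * auto_derive; auto. ring.
    + exists (- sin q * A' p). apply (is_derive_ext (fun y => - sin q * A y)).
      * intros; symmetry; apply Dq_sep.
      * apply is_derive_scal, is_derive_branch; auto.
  - intros q p Hp. split.
    + exists (- sin q * A' p). apply (is_derive_ext (fun x => cos x * A' p)).
      * intros; symmetry; apply Dp_sep; auto.
      * auto_derive; auto. ring.
    + eexists. apply is_derive_Dp_sep; auto.
  - apply (holder_open_mul_lipschitz al lo' hi' cos _ (fun p => (- K) * sinh (m * p + c)));
      auto using cos_lipschitz, bounded_lipschitz_sinh_affine.
    intros q p Hp. rewrite DqDq_sep, HA by auto. ring.
  - apply (holder_open_mul_lipschitz al lo' hi' sin _ (fun p => (- (K * m)) * cosh (m * p + c)));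
      auto using sin_lipschitz, bounded_lipschitz_cosh_affine.
    intros q p Hp. rewrite DpDq_sep by auto. unfold A'. ring.
  - apply (holder_open_mul_lipschitz al lo' hi' sin _ (fun p => (- (K * m)) * cosh (m * p + c)));
      auto using sin_lipschitz, bounded_lipschitz_cosh_affine.
    intros q p Hp. rewrite DqDp_sep by auto. unfold A'. ring.
  - apply (holder_open_mul_lipschitz al lo' hi' cos _ (fun p => (K * m * m) * sinh (m * p + c)));
      auto using cos_lipschitz, bounded_lipschitz_sinh_affine.
    intros q p Hp. rewrite DpDp_sep, HA by auto. ring.
Qed.

Lemma filterlim_Dp_sep q x0 (D : R -> Prop) : locally x0 (fun u => D u -> lo < u < hi) ->
  filterlim (fun p => Dp phi q p) (within D (locally x0)) (locally (cos q * A' x0)).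
Proof.
  intros Hloc. apply (filterlim_ext_loc (fun p => cos q * A' p)).
  - apply (filter_imp (fun u => lo < u < hi)); [|exact Hloc].
    intros u Hu. symmetry. apply Dp_sep; auto.
  - apply (filterlim_filter_le_1 (F := locally x0)); [apply filter_le_within|].
    apply (ex_derive_continuous (fun p => cos q * A' p)). eexists.
    apply is_derive_scal, is_derive_scal, is_derive_scal, is_derive_cosh_affine.
Qed.

End SeparableBranch.

Definition phi0 (Gam lam p0 p1 : R) (q p : R) : R := cos q * profile Gam lam p0 p1 p.

Section KernelElement.
Variables (alpha g p0 p1 jrho Gam lam : R).
Hypothesis alpha_bounds : 0 < alpha < 1.
Hypothesis p0_lt_p1 : p0 < p1.
Hypothesis p1_neg : p1 < 0.
Hypothesis Gam_pos : 0 < Gam.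
Hypothesis lam_pos : 0 < lam.

Let A := profile Gam lam p0 p1.

Lemma sinh_p1_neg : sinh (p1 / Gam) < 0.
Proof. apply sinh_lt_0, Rdiv_neg_pos; auto. Qed.

Lemma sinh_depth_pos : 0 < sinh ((p1 - p0) / lam).
Proof. apply sinh_pos, Rdiv_lt_0_compat; lra. Qed.

Lemma profile_upper y : p1 <= y -> A y = / sinh (p1 / Gam) * sinh (/ Gam * y + 0).
Proof.
  intros Hy. unfold A, profile. destruct (Rle_dec p1 y); [|lra].
  rewrite Rplus_0_r, (Rmult_comm (/ Gam)). unfold Rdiv. ring.
Qed.

Lemma profile_lower y : y < p1 -> A y = / sinh ((p1 - p0) / lam) * sinh (/ lam * y + - (p0 / lam)).
Proof.
  intros Hy. unfold A, profile. destruct (Rle_dec p1 y); [lra|].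
  replace (/ lam * y + - (p0 / lam)) with ((y - p0) / lam) by (field; lra). unfold Rdiv. ring.
Qed.

Lemma profile_p1 : A p1 = 1.
Proof. unfold A, profile. destruct (Rle_dec p1 p1); [|lra]. field. apply Rlt_not_eq, sinh_p1_neg. Qed.

Lemma profile_p0 : A p0 = 0.
Proof. rewrite profile_lower by lra. replace (/ lam * p0 + - (p0 / lam)) with 0 by (field; lra).
  rewrite sinh_0. ring. Qed.

Lemma profile_0 : A 0 = 0.
Proof. rewrite profile_upper by lra. rewrite Rmult_0_r, Rplus_0_r, sinh_0. ring. Qed.

Lemma profile_bounded_lipschitz : bounded_lipschitz p0 0 A.
Proof.
  assert (S1 := sinh_p1_neg). assert (S2 := sinh_depth_pos).
  unfold A, profile. apply bounded_lipschitz_glue; [lra | | |].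
  - apply (bounded_lipschitz_ext _ _ _ (fun p => / sinh (p1 / Gam) * sinh (/ Gam * p + 0))).
    + intros p _. rewrite Rplus_0_r, (Rmult_comm (/ Gam)). unfold Rdiv. ring.
    + apply bounded_lipschitz_sinh_affine.
  - apply (bounded_lipschitz_ext _ _ _ (fun p => / sinh ((p1 - p0) / lam) * sinh (/ lam * p + - (p0 / lam)))).
    + intros p _. replace (/ lam * p + - (p0 / lam)) with ((p - p0) / lam) by (field; lra).
      unfold Rdiv. ring.
    + apply bounded_lipschitz_sinh_affine.
  - field. lra.
Qed.

Lemma phi0_holder lo hi : p0 <= lo -> hi <= 0 -> holder alpha (closed_strip lo hi) (phi0 Gam lam p0 p1).
Proof.
  intros Hlo Hhi. apply (holder_subset _ _ (closed_strip p0 0)).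
  - unfold closed_strip. intros; lra.
  - apply holder_mul_lipschitz; auto using cos_lipschitz, profile_bounded_lipschitz.
    intros; apply Rabs_le, COS_bound.
Qed.

Lemma phi0_C2alpha_upper lo hi : p1 <= lo -> hi <= 0 -> C2alpha alpha lo hi (phi0 Gam lam p0 p1).
Proof.
  intros Hlo Hhi. apply (sep_C2alpha A (/ sinh (p1 / Gam)) (/ Gam) 0 p1 1); try lra; auto.
  - intros y Hy. apply profile_upper. lra.
  - apply phi0_holder; lra.
Qed.

Lemma phi0_C2alpha_lower lo hi : p0 <= lo -> hi <= p1 -> C2alpha alpha lo hi (phi0 Gam lam p0 p1).
Proof.
  intros Hlo Hhi. apply (sep_C2alpha A (/ sinh ((p1 - p0) / lam)) (/ lam) (- (p0 / lam)) (p0 - 1) p1); try lra; auto.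
  - intros y Hy. apply profile_lower. lra.
  - apply phi0_holder; lra.
Qed.

Lemma phi0_in_X : in_X alpha p0 p1 (phi0 Gam lam p0 p1).
Proof.
  split; [| split; [| split; [| split; [| split]]]].
  - intros q p _. unfold phi0. rewrite cos_plus, cos_2PI, sin_2PI, cos_neg. split; [ring | reflexivity].
  - apply phi0_holder; lra.
  - intros d Hd. split; [apply phi0_C2alpha_lower | apply phi0_C2alpha_upper]; lra.
  - intros q. unfold phi0. fold A. rewrite profile_p0. ring.
  - apply phi0_C2alpha_upper; lra.
  - apply phi0_C2alpha_lower; lra.
Qed.
Lemma phi0_in_kernel : g * jrho = Gam ^ 2 * coth (p1 / Gam) - lam ^ 2 * coth ((p1 - p0) / lam) ->
  in_kernel alpha g p0 p1 jrho Gam lam (phi0 Gam lam p0 p1).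
Proof.
  intros Hdisp. assert (S1 := sinh_p1_neg). assert (S2 := sinh_depth_pos).
  assert (Hup : forall y, p1 < y < 1 -> A y = / sinh (p1 / Gam) * sinh (/ Gam * y + 0)).
  { intros y Hy. apply profile_upper. lra. }
  assert (Hlow : forall y, p0 - 1 < y < p1 ->
    A y = / sinh ((p1 - p0) / lam) * sinh (/ lam * y + - (p0 / lam))).
  { intros y Hy. apply profile_lower. lra. }
  split; [apply phi0_in_X | split; [| split; [| split]]].
  - intros q p Hp. unfold phi0. fold A.
    rewrite (DpDp_sep A _ _ _ p1 1 Hup q p), (DqDq_sep A q p) by lra. field. lra.
  - intros q p Hp. unfold phi0. fold A.
    rewrite (DpDp_sep A _ _ _ (p0 - 1) p1 Hlow q p), (DqDq_sep A q p) by lra. field. lra.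
  - intros q. eexists. eexists. split; [| split].
    + apply (filterlim_Dp_sep A _ _ _ p1 1 Hup q p1 (fun u => p1 < u)).
      apply (filter_imp (fun u => p1 - 1 < u < p1 + 1)); [intros; lra|].
      apply locally_open_interval. lra.
    + apply (filterlim_Dp_sep A _ _ _ (p0 - 1) p1 Hlow q p1 (fun u => u < p1)).
      apply (filter_imp (fun u => p1 - 1 < u < p1 + 1)); [intros; lra|].
      apply locally_open_interval. lra.
    + unfold phi0. fold A. rewrite profile_p1.
      replace (2 * g * jrho) with (2 * (g * jrho)) by ring. rewrite Hdisp. unfold coth.
      replace (/ Gam * p1 + 0) with (p1 / Gam) by (field; lra).
      replace (/ lam * p1 + - (p0 / lam)) with ((p1 - p0) / lam) by (field; lra).
      field. repeat split; lra.
  - intros q. unfold phi0, dmean. fold A. rewrite profile_0, profile_p1.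
    rewrite (RInt_ext _ (fun x => cos (INR 1 * x))) by (intros; simpl; rewrite Rmult_1_l, Rmult_1_r; reflexivity).
    rewrite (is_RInt_unique _ _ _ _ (is_RInt_cos_nat 1 (le_n 1))). ring.
Qed.
End KernelElement.

(** * The kernel is spanned by phi0 *)

Section Uniqueness.
Variables (alpha g p0 p1 jrho Gam lam : R) (phi : R -> R -> R).
Hypothesis alpha_bounds : 0 < alpha < 1.
Hypothesis p0_lt_p1 : p0 < p1.
Hypothesis p1_neg : p1 < 0.
Hypothesis Gam_pos : 0 < Gam.
Hypothesis lam_pos : 0 < lam.
Hypothesis dispersion : g * jrho = Gam ^ 2 * coth (p1 / Gam) - lam ^ 2 * coth ((p1 - p0) / lam).
Hypothesis phi_kernel : in_kernel alpha g p0 p1 jrho Gam lam phi.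

Lemma kernel_continuous_q p : p0 <= p <= 0 -> forall q, continuous (fun x => phi x p) q.
Proof.
  intros Hp. destruct phi_kernel as [[_ [Hhol _]] _].
  apply (holder_continuous_q alpha (closed_strip p0 0)); try lra; auto.
Qed.

Lemma kernel_cos_coef_ode k :
  (forall p, p1 < p < 0 -> is_derive (cos_coef phi k) p (cos_coef (Dp phi) k p) /\
     is_derive (cos_coef (Dp phi) k) p ((/ Gam * INR k) * (/ Gam * INR k) * cos_coef phi k p)) /\
  (forall p, p0 < p < p1 -> is_derive (cos_coef phi k) p (cos_coef (Dp phi) k p) /\
     is_derive (cos_coef (Dp phi) k) p ((/ lam * INR k) * (/ lam * INR k) * cos_coef phi k p)).
Proof.
  destruct phi_kernel as [[Hper [_ [HC2 [_ [HC1a HC1b]]]]] [Heq1 [Heq2 _]]].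
  assert (Hpr : forall q p, p0 <= p <= 0 -> phi (q + 2 * PI) p = phi q p) by (intros; apply Hper; auto).
  split.
  - apply (cos_coef_ode alpha phi p1 0 (/ Gam) k alpha_bounds HC1a).
    + intros p Hp. exists (p1 + (p - p1) / 2), 0. split; [lra | split; [lra|]].
      apply (HC2 ((p - p1) / 2)). lra.
    + intros p Hp. apply kernel_continuous_q. lra.
    + intros q p Hp. apply Hpr. lra.
    + exact Heq1.
  - apply (cos_coef_ode alpha phi p0 p1 (/ lam) k alpha_bounds HC1b).
    + intros p Hp. exists p0, (p1 - (p1 - p) / 2). split; [lra | split; [lra|]].
      apply (HC2 ((p1 - p) / 2)). lra.
    + intros p Hp. apply kernel_continuous_q. lra.
    + intros q p Hp. apply Hpr. lra.
    + exact Heq2.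
Qed.

Lemma kernel_cos_coef k p : p0 <= p <= 0 ->
  cos_coef phi k p = if Nat.eq_dec k 1 then cos_coef phi k p1 * profile Gam lam p0 p1 p else 0.
Proof.
  destruct (kernel_cos_coef_ode k) as [Dup Dlow].
  assert (Hk := phi_kernel). destruct Hk as [[_ [Hhol [_ [Hbot [HC1a HC1b]]]]] [_ [_ [Hjump Htop]]]].
  destruct (cos_coef_holder alpha phi k p0 0 ltac:(lra) Hhol) as [Kh HKh].
  destruct (cos_coef_transmission alpha phi g jrho Gam lam p0 p1 k ltac:(lra) p0_lt_p1 p1_neg Gam_pos
    lam_pos Hjump (proj2 (proj2 (proj2 HC1a))) (proj2 (proj2 (proj2 HC1b)))
    (kernel_continuous_q p1 ltac:(lra))) as [Kj HKj].
  assert (Hb := cos_coef_zero phi k p0 Hbot).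
  assert (Ht : (1 <= k)%nat -> cos_coef phi k 0 = 0).
  { intros Hk. apply (cos_coef_const _ k 0 (dmean p1 phi)); auto. intros q. specialize (Htop q). lra. }
  destruct (Nat.eq_dec k 1) as [->|Hk1]; [|destruct k as [|k]].
  - apply (mode1_profile (cos_coef phi 1) (cos_coef (Dp phi) 1) 1 alpha Gam lam p0 p1 (g * jrho) Kh Kj); auto; lra.
  - apply (mode0_zero (cos_coef phi 0) (cos_coef (Dp phi) 0) 0 alpha Gam lam p0 p1 (g * jrho) Kh Kj); auto; try lra.
    apply cos_coef0_top; auto.
  - apply (mode_ge2_zero (cos_coef phi (S k)) (cos_coef (Dp phi) (S k)) (S k) alpha Gam lam p0 p1 (g * jrho) Kh Kj); auto; try lra; try lia.
    apply Ht. lia.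
Qed.

(* Subtracting the multiple of phi0 with the same first cosine coefficient at the interface leaves
   a function all of whose cosine coefficients vanish. *)
Lemma kernel_eq_mul_phi0 : exists c : R, forall q p, p0 <= p <= 0 -> phi q p = c * phi0 Gam lam p0 p1 q p.
Proof.
  assert (Hk := phi_kernel). destruct Hk as [[Hper [Hhol _]] _].
  assert (HP := PI_RGT_0).
  set (beta := cos_coef phi 1 p1 / PI). exists beta. intros q p Hp.
  set (A := profile Gam lam p0 p1 p).
  set (f := fun x => phi x p - beta * A * cos x).
  assert (Hcq := kernel_continuous_q p Hp).
  assert (Hcf : forall x, continuous f x).
  { intros x. apply (continuous_minus (fun x => phi x p) (fun x => beta * A * cos x)); auto.
    apply (ex_derive_continuous (fun x => beta * A * cos x)). auto_derive; auto. }
  assert (Hpf : forall x, f (x + 2 * PI) = f x).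
  { intros x. unfold f. rewrite (proj1 (Hper x p Hp)), cos_plus, cos_2PI, sin_2PI. ring. }
  assert (Hz : forall x, - PI < x < PI -> f x = 0).
  { destruct Hhol as [[M HM] _].
    apply (cos_orthogonal_zero f (M + Rabs (beta * A))); auto.
    - intros x. unfold f. rewrite (proj2 (Hper x p Hp)), cos_neg. reflexivity.
    - intros k. apply is_RInt_unique.
      assert (J := is_RInt_lin_comb _ _ _ _ 1 (- (beta * A)) _ _
        (RInt_correct_R _ _ _ (ex_RInt_mul_continuous _ _ (- PI) PI Hcq (continuous_cos_mul (INR k))))
        (is_RInt_cos_cos_nat k)).
      cbv beta in J. fold (cos_coef phi k p) in J. rewrite (kernel_cos_coef k p Hp) in J.
      replace 0 with (1 * (if Nat.eq_dec k 1 then cos_coef phi k p1 * A else 0) +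
        - (beta * A) * (if Nat.eq_dec k 1 then PI else 0)).
      + revert J. apply is_RInt_ext_R. intros x _. unfold f. ring.
      + destruct (Nat.eq_dec k 1) as [->|]; [unfold beta; field; lra | ring].
    - intros x. unfold f. assert (H1 := HM x p Hp).
      apply Rle_trans with (1 := Rabs_triang _ _). rewrite Rabs_Ropp, Rabs_mult.
      assert (Rabs (cos x) <= 1) by (apply Rabs_le, COS_bound).
      assert (H3 := Rabs_pos (beta * A)). nra. }
  assert (E := periodic_zero f Hpf Hz (Hcf PI) q).
  unfold f in E. unfold phi0. fold A. lra.
Qed.

End Uniqueness.

Theorem lemma3p5 (alpha g ell p0 p1 jrho Gam lam : R) :
  0 < alpha < 1 -> 0 < g -> 0 < ell -> p0 < p1 -> p1 < 0 -> jrho < 0 -> 0 < Gam ->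
  Rabs p1 = Gam * ell ->
  g * jrho - Gam ^ 2 * coth (p1 / Gam) < 0 ->
  0 < lam ->
  g * jrho = Gam ^ 2 * coth (p1 / Gam) - lam ^ 2 * coth ((p1 - p0) / lam) ->
  (forall mu, 0 < mu ->
     g * jrho = Gam ^ 2 * coth (p1 / Gam) - mu ^ 2 * coth ((p1 - p0) / mu) -> mu = lam) ->
  exists phi0,
    in_kernel alpha g p0 p1 jrho Gam lam phi0 /\
    (exists q p, p0 <= p <= 0 /\ phi0 q p <> 0) /\
    (forall phi, in_kernel alpha g p0 p1 jrho Gam lam phi ->
       exists c : R, forall q p, p0 <= p <= 0 -> phi q p = c * phi0 q p).
Proof.
  intros Halpha _ _ Hp01 Hp1 _ HGam _ _ Hlam Hdisp _.
  exists (phi0 Gam lam p0 p1). split; [|split].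
  - apply phi0_in_kernel; auto.
  - exists 0, p1. split; [lra|]. unfold phi0. rewrite cos_0, profile_p1, Rmult_1_l by auto. apply R1_neq_R0.
  - intros phi Hphi. apply (kernel_eq_mul_phi0 alpha g p0 p1 jrho Gam lam phi); auto.
Qed.
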